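(* For every $X\subseteq\mathbb N$ and $\alpha\in(71/72,1]$, the algebra $\mathcal D_{\mathcal K}(X,\alpha)$ is an almost masa of $\mathcal A_0(X)$.
   Context: Fix an orthonormal basis $(e_k)$ of $\ell_2$; $H_n=\mathrm{span}\{e_{2n},e_{2n+1}\}$. $\mathcal A_0$ is the set of $T\in\mathcal B(\ell_2)$ with $\langle Te_k,e_m\rangle\ne0\Rightarrow\{k,m\}\subseteq\{2n,2n+1\}$ for some $n$, written $T=(T_n)$, $T_n\in\mathcal B(H_n)$ the restriction; $\mathcal A_0(X)=\{T\in\mathcal A_0:T_n=0\ \forall n\notin X\}$. For $\alpha\in(71/72,1]$, $f_{\alpha,2n}=\alpha e_{2n}+\sqrt{1-\alpha^2}e_{2n+1}$, $f_{\alpha,2n+1}=\sqrt{1-\alpha^2}e_{2n}-\alpha e_{2n+1}$; $\mathcal D(X,\alpha)$ is the set of $T\in\mathcal A_0(X)$ with $T_n$ diagonal in $\{f_{\alpha,2n},f_{\alpha,2n+1}\}$ for all $n\in X$; $\mathcal D_{\mathcal K}(X,\alpha)=\{S+R:S\in\mathcal D(X,\alpha),R\in\mathcal K(\ell_2)\cap\mathcal A_0(X)\}$. $S,T$ almost commute if $ST-TS$ is compact; an almost masa of a C*-algebra $\mathcal C\subseteq\mathcal B(\ell_2)$ is a C*-subalgebra of $\mathcal C$ maximal under inclusion among C*-subalgebras of $\mathcal C$ whose elements pairwise almost commute. *)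

From Stdlib Require Import Reals.
From Coquelicot Require Import Coquelicot.
Open Scope R_scope.

Definition sqsum (u : nat -> C) : nat -> R := fun k => (Cmod (u k)) ^ 2.

Record l2 := L2 { lv :> nat -> C ; lv_sq : ex_series (sqsum lv) }.

Definition vnorm (u : nat -> C) : R := sqrt (Series (sqsum u)).

Definition inner (u v : nat -> C) : C :=
  (Series (fun k => Re (Cmult (u k) (Cconj (v k)))),
   Series (fun k => Im (Cmult (u k) (Cconj (v k))))).

Record op := Op {
  app :> l2 -> l2 ;
  op_lin : forall (c d : C) (u v w : l2),
      (forall k, lv w k = Cplus (Cmult c (lv u k)) (Cmult d (lv v k))) ->
      forall k, lv (app w) k = Cplus (Cmult c (lv (app u) k)) (Cmult d (lv (app v) k)) ;
  op_bdd : exists M : R, forall u : l2, vnorm (app u) <= M * vnorm u }.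

Definition is_sum (S T U : op) : Prop :=
  forall (u : l2) k, lv (U u) k = Cplus (lv (S u) k) (lv (T u) k).
Definition is_scal (c : C) (T U : op) : Prop :=
  forall (u : l2) k, lv (U u) k = Cmult c (lv (T u) k).
Definition is_comp (S T U : op) : Prop :=
  forall (u : l2) k, lv (U u) k = lv (S (T u)) k.
Definition is_zero_op (Z : op) : Prop := forall (u : l2) k, lv (Z u) k = RtoC 0.
Definition is_adjoint (T U : op) : Prop :=
  forall u v : l2, inner (T u) v = inner u (U v).

Definition op_norm_cvg (Tn : nat -> op) (T : op) : Prop :=
  forall eps : R, 0 < eps -> exists N : nat, forall n, (N <= n)%nat ->
    forall u : l2, vnorm (fun k => Cminus (lv (Tn n u) k) (lv (T u) k)) <= eps * vnorm u.

(** compact operator: the image of every bounded sequence has a norm-convergent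
    subsequence (with limit in l2), i.e. bounded sets are mapped to relatively
    compact sets *)
Definition compact_op (K : op) : Prop :=
  forall (u : nat -> l2) (M : R), (forall n, vnorm (u n) <= M) ->
    exists (phi : nat -> nat) (w : l2),
      (forall n, (phi n < phi (S n))%nat) /\
      forall eps : R, 0 < eps -> exists N : nat, forall n, (N <= n)%nat ->
        vnorm (fun k => Cminus (lv (K (u (phi n))) k) (lv w k)) <= eps.

Definition almost_commute (S T : op) : Prop :=
  exists K : op, compact_op K /\
    forall (u : l2) k, lv (K u) k = Cminus (lv (S (T u)) k) (lv (T (S u)) k).

Definition cstar_alg (A : op -> Prop) : Prop :=
  (exists Z, A Z /\ is_zero_op Z) /\
  (forall S T U, A S -> A T -> is_sum S T U -> A U) /\
  (forall c T U, A T -> is_scal c T U -> A U) /\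
  (forall S T U, A S -> A T -> is_comp S T U -> A U) /\
  (forall T, A T -> exists U, A U /\ is_adjoint T U) /\
  (forall (Tn : nat -> op) T, (forall n, A (Tn n)) -> op_norm_cvg Tn T -> A T).

Definition cstar_subalg (A Cc : op -> Prop) : Prop :=
  cstar_alg A /\ (forall T, A T -> Cc T).

Definition pairwise_almost_commuting (A : op -> Prop) : Prop :=
  forall S T, A S -> A T -> almost_commute S T.

Definition almost_masa (A Cc : op -> Prop) : Prop :=
  cstar_subalg A Cc /\ pairwise_almost_commuting A /\
  forall B, cstar_subalg B Cc -> pairwise_almost_commuting B ->
    (forall T, A T -> B T) -> forall T, B T -> A T.

Definition is_ONB (e : nat -> l2) : Prop :=
  (forall k m, inner (e k) (e m) = if Nat.eqb k m then RtoC 1 else RtoC 0) /\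
  (forall u : l2, (forall k, inner u (e k) = RtoC 0) -> forall j, lv u j = RtoC 0).

Definition in_block (k n : nat) : Prop := k = (2 * n)%nat \/ k = (2 * n + 1)%nat.

Definition A0 (e : nat -> l2) (T : op) : Prop :=
  forall k m, inner (T (e k)) (e m) <> RtoC 0 -> exists n, in_block k n /\ in_block m n.

(** T_n = 0, i.e. T vanishes on H_n = span{e_2n, e_2n+1} *)
Definition A0X (e : nat -> l2) (X : nat -> Prop) (T : op) : Prop :=
  A0 e T /\ forall n, ~ X n -> forall k, in_block k n -> forall j, lv (T (e k)) j = RtoC 0.

Definition eigvec (T : op) (w : l2) : Prop :=
  exists lam : C, forall j, lv (T w) j = Cmult lam (lv w j).

(** T_n is diagonal in {f_{alpha,2n}, f_{alpha,2n+1}} *)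
Definition diag_f (e : nat -> l2) (alpha : R) (n : nat) (T : op) : Prop :=
  (forall w : l2, (forall j, lv w j = Cplus (Cmult (RtoC alpha) (lv (e (2*n)%nat) j))
                                  (Cmult (RtoC (sqrt (1 - alpha^2))) (lv (e (2*n+1)%nat) j)))
                  -> eigvec T w) /\
  (forall w : l2, (forall j, lv w j = Cminus (Cmult (RtoC (sqrt (1 - alpha^2))) (lv (e (2*n)%nat) j))
                                  (Cmult (RtoC alpha) (lv (e (2*n+1)%nat) j)))
                  -> eigvec T w).

Definition Dset (e : nat -> l2) (X : nat -> Prop) (alpha : R) (T : op) : Prop :=
  A0X e X T /\ forall n, X n -> diag_f e alpha n T.

Definition DK (e : nat -> l2) (X : nat -> Prop) (alpha : R) (T : op) : Prop :=
  exists S R0 : op, Dset e X alpha S /\ compact_op R0 /\ A0X e X R0 /\ is_sum S R0 T.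

From Stdlib Require Import Reals Lra Lia Classical ClassicalEpsilon.
From Coquelicot Require Import Coquelicot.
Open Scope R_scope.

(* Let [P] and [Q] be the orthogonal projections onto the closed spans of the [f_(alpha,2n)] and
   of the [f_(alpha,2n+1)], [n] in [X]; both lie in [D(X, alpha)]. An operator [T] in [A_0(X)]
   acts on each [H_n] by a 2x2 matrix in the basis [(f_(alpha,2n), f_(alpha,2n+1))], so that
   [T = (PTP + QTQ) + (PTQ + QTP)] with [PTP + QTQ] in [D(X, alpha)] and
   [PTQ + QTP = Q [T, P] - P [T, P]]. Hence [T] lies in [D_K(X, alpha)] as soon as it almost
   commutes with [P], which gives maximality. Since elements of [D(X, alpha)] commute with each
   other and compact operators form a norm-closed ideal stable under adjoints, [D_K(X, alpha)] is
   a C*-algebra of pairwise almost commuting operators. *)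

Ltac unfold_C := unfold Cminus, Cplus, Cmult, Copp, Cconj, RtoC, Re, Im in *; simpl in *.
Ltac C_ring := apply injective_projections; unfold_C; simpl; ring.

(** * Real series *)

Lemma sum_n_succ (a : nat -> R) n : sum_n a (S n) = sum_n a n + a (S n).
Proof. rewrite sum_Sn. reflexivity. Qed.

Lemma sum_n_incr (a : nat -> R) : (forall k, 0 <= a k) ->
  forall n m, (n <= m)%nat -> sum_n a n <= sum_n a m.
Proof.
  intros H n m Hnm. induction Hnm as [|m _ IH]; [lra|].
  rewrite sum_n_succ. specialize (H (S m)). lra.
Qed.

Lemma sum_n_nonneg (a : nat -> R) n : (forall k, 0 <= a k) -> 0 <= sum_n a n.
Proof.
  intros H. apply Rle_trans with (sum_n a 0); [rewrite sum_O; apply H|].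
  apply sum_n_incr; auto; lia.
Qed.

Lemma sum_n_le (a b : nat -> R) : (forall k, a k <= b k) -> forall n, sum_n a n <= sum_n b n.
Proof.
  intros H n. induction n; [rewrite !sum_O; auto|].
  rewrite !sum_n_succ. specialize (H (S n)). lra.
Qed.

Lemma is_series_finite (a : nat -> R) N : (forall k, (N < k)%nat -> a k = 0) ->
  is_series a (sum_n a N).
Proof.
  intros H.
  assert (Hstat : forall n, (N <= n)%nat -> sum_n a n = sum_n a N).
  { intros n Hn; induction Hn as [|m Hm IH]; [reflexivity|].
    rewrite sum_n_succ, IH, (H (S m)) by lia. lra. }
  change (is_lim_seq (sum_n a) (sum_n a N)).
  apply (is_lim_seq_ext_loc (fun _ => sum_n a N)); [exists N; intros; symmetry; auto|].
  apply is_lim_seq_const.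
Qed.

Lemma ex_series_finite (a : nat -> R) N : (forall k, (N < k)%nat -> a k = 0) -> ex_series a.
Proof. intros H. eexists. apply is_series_finite; eauto. Qed.

Lemma Series_partial_sums (a : nat -> R) : ex_series a -> is_lim_seq (sum_n a) (Series a).
Proof. intros H. exact (Series_correct a H). Qed.

Lemma ex_series_bounded (a : nat -> R) B : (forall k, 0 <= a k) -> (forall N, sum_n a N <= B) ->
  ex_series a /\ Series a <= B.
Proof.
  intros H0 HB.
  destruct (ex_finite_lim_seq_incr (sum_n a) B) as [l Hl]; auto.
  { intros n; rewrite sum_n_succ; specialize (H0 (S n)); lra. }
  split; [exists l; exact Hl|].
  rewrite (is_series_unique a l Hl).
  assert (Hle : Rbar_le l B) by (apply (is_lim_seq_le (sum_n a) (fun _ => B)); auto using is_lim_seq_const).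
  exact Hle.
Qed.

Lemma sum_n_le_Series (a : nat -> R) N : (forall k, 0 <= a k) -> ex_series a -> sum_n a N <= Series a.
Proof.
  intros H0 He.
  assert (Hle : Rbar_le (sum_n a N) (Series a)).
  { apply (is_lim_seq_le_loc (fun _ => sum_n a N) (sum_n a)).
    - exists N; intros; apply sum_n_incr; auto.
    - apply is_lim_seq_const.
    - apply Series_partial_sums, He. }
  exact Hle.
Qed.

Lemma Series_nonneg a : (forall k, 0 <= a k) -> ex_series a -> 0 <= Series a.
Proof. intros H He. eapply Rle_trans; [|apply (sum_n_le_Series a 0); auto]. rewrite sum_O; auto. Qed.

Lemma Series_le_gen (x y : nat -> R) : (forall k, x k <= y k) -> ex_series x -> ex_series y ->
  Series x <= Series y.
Proof.
  intros H Hx Hy.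
  assert (Hle : Rbar_le (Series x) (Series y))
    by (apply (is_lim_seq_le (sum_n x) (sum_n y)); auto using sum_n_le, Series_partial_sums).
  exact Hle.
Qed.

(* Stated over [R] (not a normed module) so that [ring] applies to the side conditions. *)
Lemma ex_series_ext_R (x y : nat -> R) : (forall k, x k = y k) -> ex_series x -> ex_series y.
Proof. apply ex_series_ext. Qed.

Lemma ex_series_Rabs_le (x y : nat -> R) : (forall k, Rabs (x k) <= y k) -> ex_series y -> ex_series x.
Proof. intros H Hy. apply (ex_series_le x y); auto. Qed.

Lemma Series_Rabs_le (x y : nat -> R) : (forall k, Rabs (x k) <= y k) ->
  ex_series x -> ex_series y -> Rabs (Series x) <= Series y.
Proof.
  intros H Hx Hy. apply Rabs_le. split.
  - rewrite <- Series_opp. apply Series_le_gen; auto.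
    + intros k; specialize (H k). apply Rabs_le_between in H. lra.
    + exact (ex_series_opp y Hy).
  - apply Series_le_gen; auto. intros k; specialize (H k). apply Rabs_le_between in H. lra.
Qed.

Lemma ex_series_lincomb (p q : R) (x y : nat -> R) : ex_series x -> ex_series y ->
  ex_series (fun k => p * x k + q * y k).
Proof.
  intros Hx Hy. apply (ex_series_plus (fun k => p * x k) (fun k => q * y k)).
  - apply (ex_series_scal_l p x Hx).
  - apply (ex_series_scal_l q y Hy).
Qed.

Lemma Series_lincomb (p q : R) (x y : nat -> R) : ex_series x -> ex_series y ->
  Series (fun k => p * x k + q * y k) = p * Series x + q * Series y.
Proof.
  intros Hx Hy. rewrite Series_plus, !Series_scal_l; [reflexivity| |].
  - apply (ex_series_scal_l p x Hx).
  - apply (ex_series_scal_l q y Hy).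
Qed.

Lemma Series_lincomb3 (p q r : R) (x y z : nat -> R) :
  ex_series x -> ex_series y -> ex_series z ->
  Series (fun k => p * x k + q * y k + r * z k) = p * Series x + q * Series y + r * Series z.
Proof.
  intros Hx Hy Hz.
  rewrite (Series_ext _ (fun k => 1 * (p * x k + q * y k) + r * z k)) by (intros; ring).
  rewrite Series_lincomb, Series_lincomb by auto using ex_series_lincomb. ring.
Qed.

Lemma Series_lincomb4 (p q r s : R) (x y z t : nat -> R) :
  ex_series x -> ex_series y -> ex_series z -> ex_series t ->
  Series (fun k => p * x k + q * y k + r * z k + s * t k) =
  p * Series x + q * Series y + r * Series z + s * Series t.
Proof.
  intros Hx Hy Hz Ht.
  rewrite (Series_ext _ (fun k => 1 * (p * x k + q * y k) + 1 * (r * z k + s * t k))) by (intros; ring).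
  rewrite Series_lincomb by auto using ex_series_lincomb. rewrite !Series_lincomb by auto. ring.
Qed.

Lemma Series_single (a : nat -> R) j : (forall k, k <> j -> a k = 0) -> Series a = a j.
Proof.
  intros H. apply is_series_unique.
  assert (Hbefore : forall m, (m < j)%nat -> sum_n a m = 0).
  { intros m Hm; induction m; [rewrite sum_O; apply H; lia|].
    rewrite sum_n_succ, IHm, H by lia. lra. }
  assert (Hj : sum_n a j = a j).
  { destruct j; [rewrite sum_O; auto|]. rewrite sum_n_succ, Hbefore by lia. lra. }
  rewrite <- Hj. apply is_series_finite. intros; apply H; lia.
Qed.

Lemma Series_zero : Series (fun _ => 0) = 0.
Proof. exact (Series_single (fun _ => 0) 0 (fun _ _ => eq_refl)). Qed.

Lemma Rabs_le_eps_eq_0 x : (forall eps, 0 < eps -> Rabs x <= eps) -> x = 0.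
Proof.
  intros H. destruct (Req_dec x 0) as [E|E]; auto. exfalso.
  assert (H0 : 0 < Rabs x) by (apply Rabs_pos_lt; auto).
  assert (H1 := H (Rabs x / 2) ltac:(lra)). lra.
Qed.

Lemma is_lim_seq_eps (a : nat -> R) (l : R) : is_lim_seq a l ->
  forall eps, 0 < eps -> exists N, forall n, (N <= n)%nat -> Rabs (a n - l) < eps.
Proof.
  intros H eps He. apply is_lim_seq_spec in H. destruct (H (mkposreal eps He)) as [N HN].
  exists N. intros n Hn. apply (HN n Hn).
Qed.

Lemma is_lim_seq_of_eps (a : nat -> R) (l : R) :
  (forall eps, 0 < eps -> exists N, forall n, (N <= n)%nat -> Rabs (a n - l) <= eps) ->
  is_lim_seq a l.
Proof.
  intros H. apply is_lim_seq_spec. intros [eps He]. destruct (H (eps / 2)) as [N HN]; [lra|].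
  exists N. intros n Hn. specialize (HN n Hn). simpl. lra.
Qed.

Lemma is_lim_seq_eq (a : nat -> R) (l1 l2 : R) : is_lim_seq a l1 -> is_lim_seq a l2 -> l1 = l2.
Proof.
  intros H1 H2. apply is_lim_seq_unique in H1. apply is_lim_seq_unique in H2.
  rewrite H1 in H2. injection H2; auto.
Qed.

Lemma is_lim_seq_sum_n (f : nat -> nat -> R) (g : nat -> R) K :
  (forall j, is_lim_seq (fun m => f m j) (g j)) -> is_lim_seq (fun m => sum_n (f m) K) (sum_n g K).
Proof.
  intros H. induction K.
  - rewrite sum_O. apply (is_lim_seq_ext (fun m => f m O)); auto. intros; rewrite sum_O; auto.
  - rewrite sum_n_succ. apply (is_lim_seq_ext (fun m => sum_n (f m) K + f m (S K))).
    + intros; rewrite sum_n_succ; auto.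
    + apply is_lim_seq_plus'; auto.
Qed.

Lemma mul_div_succ_le M eps : 0 <= M -> 0 <= eps -> M * (eps / (M + 1)) <= eps.
Proof.
  intros HM He. replace (M * (eps / (M + 1))) with (eps - eps / (M + 1)) by (field; lra).
  assert (0 <= eps / (M + 1)) by (apply Rdiv_le_0_compat; lra). lra.
Qed.

Lemma le_sqr_of_le_mul_sqrt S a : 0 <= S -> 0 <= a -> S <= a * sqrt S -> S <= a * a.
Proof.
  intros HS Ha H. assert (Hs : sqrt S * sqrt S = S) by (apply sqrt_sqrt; auto).
  assert (Hle : sqrt S <= a).
  { destruct (Req_dec (sqrt S) 0) as [Z|Z]; [rewrite Z; auto|].
    assert (0 < sqrt S) by (assert (H5 := sqrt_pos S); lra).
    apply (Rmult_le_reg_r (sqrt S)); auto. nra. }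
  rewrite <- Hs. assert (0 <= sqrt S) by apply sqrt_pos. nra.
Qed.

(** * Square-summable sequences *)

Definition is_l2 (u : nat -> C) := ex_series (sqsum u).
Definition vec_eq (u v : nat -> C) := forall j, u j = v j.
Definition sqnorm (u : nat -> C) := Series (sqsum u).

Lemma l2_is_l2 (u : l2) : is_l2 u.
Proof. exact (lv_sq u). Qed.
#[local] Hint Resolve l2_is_l2 : core.

Lemma sqsum_alt u k : sqsum u k = fst (u k) ^ 2 + snd (u k) ^ 2.
Proof. exact (Cmod2_alt (u k)). Qed.

Lemma sqsum_nonneg u k : 0 <= sqsum u k.
Proof. rewrite sqsum_alt. nra. Qed.

Lemma sqsum_scal c u k : sqsum (fun k => Cmult c (u k)) k = Cmod c ^ 2 * sqsum u k.
Proof. rewrite !sqsum_alt, Cmod2_alt. unfold_C. ring. Qed.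

Definition re_term (u v : nat -> C) k := fst (u k) * fst (v k) + snd (u k) * snd (v k).
Definition im_term (u v : nat -> C) k := snd (u k) * fst (v k) - fst (u k) * snd (v k).
Definition mod_term (u v : nat -> C) k := Cmod (u k) * Cmod (v k).

Lemma inner_alt u v : inner u v = (Series (re_term u v), Series (im_term u v)).
Proof. unfold inner. f_equal; apply Series_ext; intros; unfold re_term, im_term; unfold_C; ring. Qed.

Lemma re_im_term_le u v k :
  Rabs (re_term u v k) <= mod_term u v k /\ Rabs (im_term u v k) <= mod_term u v k.
Proof.
  unfold re_term, im_term, mod_term, Cmod. destruct (u k) as [a b], (v k) as [c d]. cbn [fst snd].
  rewrite <- sqrt_mult by (apply Rplus_le_le_0_compat; apply pow2_ge_0).
  assert (Hprod : (a ^ 2 + b ^ 2) * (c ^ 2 + d ^ 2) = (a * c + b * d) ^ 2 + (b * c - a * d) ^ 2) by ring.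
  rewrite Hprod. pose proof (pow2_ge_0 (a * c + b * d)). pose proof (pow2_ge_0 (b * c - a * d)).
  split; rewrite <- sqrt_Rsqr_abs; apply sqrt_le_1_alt; unfold Rsqr; nra.
Qed.

Lemma mod_term_nonneg u v k : 0 <= mod_term u v k.
Proof. apply Rmult_le_pos; apply Cmod_ge_0. Qed.

Lemma ex_series_mod_term u v : is_l2 u -> is_l2 v -> ex_series (mod_term u v).
Proof.
  intros Hu Hv. apply (ex_series_Rabs_le _ (fun k => / 2 * sqsum u k + / 2 * sqsum v k));
    [|apply ex_series_lincomb; auto].
  intros k. rewrite Rabs_pos_eq by apply mod_term_nonneg. unfold mod_term, sqsum.
  assert (0 <= (Cmod (u k) - Cmod (v k))^2) by apply pow2_ge_0. nra.
Qed.

Lemma ex_series_re_term u v : is_l2 u -> is_l2 v -> ex_series (re_term u v).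
Proof.
  intros. apply (ex_series_Rabs_le _ (mod_term u v)); auto using ex_series_mod_term.
  apply re_im_term_le.
Qed.

Lemma ex_series_im_term u v : is_l2 u -> is_l2 v -> ex_series (im_term u v).
Proof.
  intros. apply (ex_series_Rabs_le _ (mod_term u v)); auto using ex_series_mod_term.
  apply re_im_term_le.
Qed.

Lemma inner_ext u u' v v' : vec_eq u u' -> vec_eq v v' -> inner u v = inner u' v'.
Proof. intros H1 H2. unfold inner. f_equal; apply Series_ext; intros; rewrite H1, H2; auto. Qed.

Lemma sqnorm_ext u u' : vec_eq u u' -> sqnorm u = sqnorm u'.
Proof. intros H. unfold sqnorm. apply Series_ext. intros; unfold sqsum; rewrite H; auto. Qed.

Lemma vnorm_ext u u' : vec_eq u u' -> vnorm u = vnorm u'.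
Proof. intros H. unfold vnorm. f_equal. exact (sqnorm_ext u u' H). Qed.

Lemma is_l2_ext u u' : vec_eq u u' -> is_l2 u -> is_l2 u'.
Proof. intros H. apply ex_series_ext. intros; unfold sqsum; rewrite H; auto. Qed.

Lemma is_l2_add u v : is_l2 u -> is_l2 v -> is_l2 (fun k => Cplus (u k) (v k)).
Proof.
  intros Hu Hv. apply (ex_series_Rabs_le _ (fun k => 2 * sqsum u k + 2 * sqsum v k));
    [|apply ex_series_lincomb; auto].
  intros k. rewrite Rabs_pos_eq by apply sqsum_nonneg. rewrite !sqsum_alt. unfold_C.
  destruct (u k) as [a b], (v k) as [c d]; simpl.
  assert (0 <= (a - c)^2) by apply pow2_ge_0. assert (0 <= (b - d)^2) by apply pow2_ge_0. nra.
Qed.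

Lemma is_l2_scal c u : is_l2 u -> is_l2 (fun k => Cmult c (u k)).
Proof.
  intros Hu. apply (ex_series_ext_R (fun k => Cmod c ^ 2 * sqsum u k + 0 * sqsum u k));
    [|apply ex_series_lincomb; auto].
  intros; rewrite sqsum_scal; ring.
Qed.

Lemma is_l2_lincomb a u b v : is_l2 u -> is_l2 v ->
  is_l2 (fun k => Cplus (Cmult a (u k)) (Cmult b (v k))).
Proof. intros. apply is_l2_add; apply is_l2_scal; auto. Qed.

Lemma is_l2_sub u v : is_l2 u -> is_l2 v -> is_l2 (fun k => Cminus (u k) (v k)).
Proof.
  intros Hu Hv. apply (is_l2_ext (fun k => Cplus (Cmult (RtoC 1) (u k)) (Cmult (RtoC (-1)) (v k)))).
  - intros k; C_ring.
  - apply is_l2_lincomb; auto.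
Qed.

Lemma is_l2_zero : is_l2 (fun _ => RtoC 0).
Proof. apply (ex_series_finite _ 0). intros; rewrite sqsum_alt; simpl; ring. Qed.

Lemma inner_lincomb_l (a b : C) u v w : is_l2 u -> is_l2 v -> is_l2 w ->
  inner (fun k => Cplus (Cmult a (u k)) (Cmult b (v k))) w =
  Cplus (Cmult a (inner u w)) (Cmult b (inner v w)).
Proof.
  intros Hu Hv Hw.
  assert (Hex : forall x y, is_l2 x -> is_l2 y -> ex_series (re_term x y) /\ ex_series (im_term x y))
    by (split; [apply ex_series_re_term|apply ex_series_im_term]; auto).
  destruct (Hex u w Hu Hw), (Hex v w Hv Hw).
  rewrite !inner_alt. apply injective_projections; simpl.
  - rewrite (Series_ext _ (fun k => fst a * re_term u w k + (- snd a) * im_term u w k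
                                  + fst b * re_term v w k + (- snd b) * im_term v w k))
      by (intros; unfold re_term, im_term; unfold_C; ring).
    rewrite Series_lincomb4 by auto. unfold_C. ring.
  - rewrite (Series_ext _ (fun k => snd a * re_term u w k + fst a * im_term u w k
                                  + snd b * re_term v w k + fst b * im_term v w k))
      by (intros; unfold re_term, im_term; unfold_C; ring).
    rewrite Series_lincomb4 by auto. unfold_C. ring.
Qed.

Lemma inner_conj u v : inner v u = Cconj (inner u v).
Proof.
  rewrite !inner_alt. unfold Cconj; simpl. f_equal.
  - apply Series_ext; intros; unfold re_term; ring.
  - rewrite <- Series_opp. apply Series_ext; intros; unfold im_term; ring.
Qed.

Lemma inner_lincomb_r (a b : C) u v w : is_l2 u -> is_l2 v -> is_l2 w ->
  inner w (fun k => Cplus (Cmult a (u k)) (Cmult b (v k))) =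
  Cplus (Cmult (Cconj a) (inner w u)) (Cmult (Cconj b) (inner w v)).
Proof.
  intros Hu Hv Hw. rewrite inner_conj, inner_lincomb_l by auto.
  rewrite (inner_conj w u), (inner_conj w v). C_ring.
Qed.

Lemma inner_add u v w : is_l2 u -> is_l2 v -> is_l2 w ->
  inner (fun k => Cplus (u k) (v k)) w = Cplus (inner u w) (inner v w).
Proof.
  intros. rewrite (inner_ext _ (fun k => Cplus (Cmult (RtoC 1) (u k)) (Cmult (RtoC 1) (v k))) w w).
  - rewrite inner_lincomb_l by auto. C_ring.
  - intros k; C_ring.
  - intros k; auto.
Qed.

Lemma inner_sub u v w : is_l2 u -> is_l2 v -> is_l2 w ->
  inner (fun k => Cminus (u k) (v k)) w = Cminus (inner u w) (inner v w).
Proof.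
  intros. rewrite (inner_ext _ (fun k => Cplus (Cmult (RtoC 1) (u k)) (Cmult (RtoC (-1)) (v k))) w w).
  - rewrite inner_lincomb_l by auto. C_ring.
  - intros k; C_ring.
  - intros k; auto.
Qed.

Lemma inner_scal c u w : is_l2 u -> is_l2 w ->
  inner (fun k => Cmult c (u k)) w = Cmult c (inner u w).
Proof.
  intros. rewrite (inner_ext _ (fun k => Cplus (Cmult c (u k)) (Cmult (RtoC 0) (u k))) w w).
  - rewrite inner_lincomb_l by auto. C_ring.
  - intros k; C_ring.
  - intros k; auto.
Qed.

Lemma inner_zero_l v : inner (fun _ => RtoC 0) v = RtoC 0.
Proof.
  rewrite inner_alt. unfold RtoC.
  f_equal; (etransitivity; [|apply Series_zero]);
    apply Series_ext; intros; unfold re_term, im_term; simpl; ring.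
Qed.

Lemma sqnorm_nonneg u : is_l2 u -> 0 <= sqnorm u.
Proof. intros H. apply Series_nonneg; auto. apply sqsum_nonneg. Qed.

Lemma inner_self u : is_l2 u -> inner u u = RtoC (sqnorm u).
Proof.
  intros H. rewrite inner_alt. unfold RtoC. f_equal.
  - apply Series_ext; intros; unfold re_term; rewrite sqsum_alt; ring.
  - rewrite <- Series_zero. apply Series_ext; intros; unfold im_term; ring.
Qed.

Lemma vnorm_sqr u : is_l2 u -> vnorm u ^ 2 = sqnorm u.
Proof. intros H. unfold vnorm. apply pow2_sqrt. apply sqnorm_nonneg; auto. Qed.

Lemma vnorm_nonneg u : 0 <= vnorm u.
Proof. apply sqrt_pos. Qed.

Lemma vnorm_le_sqrt u B : 0 <= B -> sqnorm u <= B * B -> vnorm u <= B.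
Proof. intros HB H. unfold vnorm. rewrite <- (sqrt_square B) by auto. apply sqrt_le_1_alt, H. Qed.

Lemma le_sqrt_mul_of_quadratic_nonneg (A B c : R) : 0 <= A -> 0 <= B -> 0 <= c ->
  (forall t, 0 <= t * t * A - 2 * t * c + B) -> c <= sqrt A * sqrt B.
Proof.
  intros HA HB Hc H.
  assert (Hsq : c * c <= A * B).
  { destruct (Req_dec A 0) as [E|E].
    - subst A. destruct (Req_dec c 0) as [E2|E2]; [subst; nra|].
      specialize (H ((B + 1) / (2 * c))).
      replace ((B+1)/(2*c) * ((B+1)/(2*c)) * 0 - 2 * ((B+1)/(2*c)) * c + B) with (-1) in H
        by (field; lra).
      lra.
    - specialize (H (c / A)).
      replace (c / A * (c / A) * A - 2 * (c / A) * c + B) with (B - c * c / A) in H by (field; lra).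
      assert (Hdiv : c * c / A * A = c * c) by (field; lra).
      assert (0 < A) by lra. nra. }
  rewrite <- sqrt_mult by auto. rewrite <- (sqrt_square c) by auto. apply sqrt_le_1_alt. auto.
Qed.

(* The discriminant argument applied to [sum (t |u_k| - |v_k|)^2 >= 0]. *)
Lemma cauchy_schwarz_mod u v : is_l2 u -> is_l2 v -> Series (mod_term u v) <= vnorm u * vnorm v.
Proof.
  intros Hu Hv. unfold vnorm. fold (sqnorm u) (sqnorm v).
  assert (Hm := ex_series_mod_term u v Hu Hv).
  apply le_sqrt_mul_of_quadratic_nonneg; auto using sqnorm_nonneg, Series_nonneg, mod_term_nonneg.
  intros t.
  set (q := fun k => (t * t) * sqsum u k + (- 2 * t) * mod_term u v k + 1 * sqsum v k).
  assert (Hq : ex_series q).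
  { apply (ex_series_ext_R (fun k => 1 * ((t * t) * sqsum u k + (- 2 * t) * mod_term u v k) + 1 * sqsum v k));
      [intros; unfold q; ring|auto using ex_series_lincomb]. }
  assert (E : Series q = t * t * sqnorm u - 2 * t * Series (mod_term u v) + sqnorm v)
    by (unfold q; rewrite Series_lincomb3 by auto; unfold sqnorm; ring).
  rewrite <- E. apply Series_nonneg; auto.
  intros k. unfold q, sqsum, mod_term.
  replace (t * t * Cmod (u k) ^ 2 + -2 * t * (Cmod (u k) * Cmod (v k)) + 1 * Cmod (v k) ^ 2)
    with ((t * Cmod (u k) - Cmod (v k)) ^ 2) by ring.
  apply pow2_ge_0.
Qed.

Lemma cauchy_schwarz_re u v : is_l2 u -> is_l2 v -> Rabs (fst (inner u v)) <= vnorm u * vnorm v.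
Proof.
  intros Hu Hv. rewrite inner_alt; simpl. eapply Rle_trans; [|apply cauchy_schwarz_mod; auto].
  apply Series_Rabs_le; auto using ex_series_re_term, ex_series_mod_term. apply re_im_term_le.
Qed.

Lemma cauchy_schwarz_im u v : is_l2 u -> is_l2 v -> Rabs (snd (inner u v)) <= vnorm u * vnorm v.
Proof.
  intros Hu Hv. rewrite inner_alt; simpl. eapply Rle_trans; [|apply cauchy_schwarz_mod; auto].
  apply Series_Rabs_le; auto using ex_series_im_term, ex_series_mod_term. apply re_im_term_le.
Qed.

Lemma sqnorm_add u v : is_l2 u -> is_l2 v ->
  sqnorm (fun k => Cplus (u k) (v k)) = sqnorm u + sqnorm v + 2 * fst (inner u v).
Proof.
  intros Hu Hv. rewrite inner_alt; simpl. unfold sqnorm.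
  rewrite (Series_ext _ (fun k => 1 * sqsum u k + 1 * sqsum v k + 2 * re_term u v k))
    by (intros; rewrite !sqsum_alt; unfold re_term; unfold_C; ring).
  rewrite Series_lincomb3 by auto using ex_series_re_term. ring.
Qed.

Lemma vnorm_triangle u v : is_l2 u -> is_l2 v ->
  vnorm (fun k => Cplus (u k) (v k)) <= vnorm u + vnorm v.
Proof.
  intros Hu Hv. assert (Hu0 := vnorm_nonneg u). assert (Hv0 := vnorm_nonneg v).
  apply vnorm_le_sqrt; [lra|]. rewrite sqnorm_add by auto.
  assert (H := cauchy_schwarz_re u v Hu Hv). apply Rabs_le_between in H.
  rewrite <- (vnorm_sqr u), <- (vnorm_sqr v) by auto. nra.
Qed.

Lemma vnorm_scal c u : is_l2 u -> vnorm (fun k => Cmult c (u k)) = Cmod c * vnorm u.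
Proof.
  intros H. unfold vnorm, sqnorm.
  rewrite (Series_ext _ (fun k => Cmod c ^ 2 * sqsum u k)) by apply sqsum_scal.
  rewrite Series_scal_l, sqrt_mult_alt, sqrt_pow2 by (apply Cmod_ge_0 || apply pow2_ge_0). auto.
Qed.

Lemma vnorm_sub_triangle (a b c : nat -> C) : is_l2 a -> is_l2 b -> is_l2 c ->
  vnorm (fun k => Cminus (a k) (c k)) <=
  vnorm (fun k => Cminus (a k) (b k)) + vnorm (fun k => Cminus (b k) (c k)).
Proof.
  intros Ha Hb Hc.
  rewrite (vnorm_ext (fun k => Cminus (a k) (c k)) (fun k => Cplus (Cminus (a k) (b k)) (Cminus (b k) (c k))))
    by (intros k; C_ring).
  apply vnorm_triangle; apply is_l2_sub; auto.
Qed.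

Lemma vnorm_sub_comm (a b : nat -> C) : is_l2 a -> is_l2 b ->
  vnorm (fun k => Cminus (a k) (b k)) = vnorm (fun k => Cminus (b k) (a k)).
Proof.
  intros. rewrite (vnorm_ext (fun k => Cminus (a k) (b k)) (fun k => Cmult (RtoC (-1)) (Cminus (b k) (a k))))
    by (intros k; C_ring).
  rewrite vnorm_scal, Cmod_R, Rabs_left by (lra || apply is_l2_sub; auto). ring.
Qed.

Lemma vnorm_sub_le (a b : nat -> C) : is_l2 a -> is_l2 b ->
  vnorm (fun k => Cminus (a k) (b k)) <= vnorm a + vnorm b.
Proof.
  intros Ha Hb.
  rewrite (vnorm_ext _ (fun k => Cplus (a k) (Cmult (RtoC (-1)) (b k)))) by (intros k; C_ring).
  eapply Rle_trans; [apply vnorm_triangle; auto using is_l2_scal|].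
  rewrite vnorm_scal, Cmod_R, Rabs_left by (lra || auto). lra.
Qed.

Lemma sqnorm_zero : sqnorm (fun _ => RtoC 0) = 0.
Proof.
  unfold sqnorm. etransitivity; [|apply Series_zero].
  apply Series_ext. intros; rewrite sqsum_alt; simpl; ring.
Qed.

Lemma vnorm_zero : vnorm (fun _ => RtoC 0) = 0.
Proof. unfold vnorm. fold (sqnorm (fun _ => RtoC 0)). rewrite sqnorm_zero. apply sqrt_0. Qed.

Lemma sqsum_le_sqnorm u j : is_l2 u -> sqsum u j <= sqnorm u.
Proof.
  intros H. eapply Rle_trans; [|apply sum_n_le_Series; auto using sqsum_nonneg].
  destruct j; [rewrite sum_O; lra|]. rewrite sum_n_succ.
  assert (0 <= sum_n (sqsum u) j) by (apply sum_n_nonneg, sqsum_nonneg). lra.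
Qed.

Lemma vnorm_eq_0 u : is_l2 u -> vnorm u = 0 -> forall j, u j = RtoC 0.
Proof.
  intros H H0 j. assert (H1 := sqsum_le_sqnorm u j H). assert (H2 := sqsum_nonneg u j).
  rewrite <- vnorm_sqr, H0, sqsum_alt in H1 by auto.
  destruct (u j) as [a b]; simpl in *. unfold RtoC. f_equal; nra.
Qed.

Lemma Rabs_coord_le_vnorm u j : is_l2 u ->
  Rabs (fst (u j)) <= vnorm u /\ Rabs (snd (u j)) <= vnorm u.
Proof.
  intros H. assert (H1 := sqsum_le_sqnorm u j H). rewrite sqsum_alt in H1.
  unfold vnorm. fold (sqnorm u). rewrite <- !sqrt_Rsqr_abs.
  split; apply sqrt_le_1_alt; unfold Rsqr; nra.
Qed.

Definition l2_add (u v : l2) : l2 :=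
  L2 (fun k => Cplus (u k) (v k)) (is_l2_add u v (lv_sq u) (lv_sq v)).
Definition l2_scal (c : C) (u : l2) : l2 := L2 (fun k => Cmult c (u k)) (is_l2_scal c u (lv_sq u)).
Definition l2_sub (u v : l2) : l2 :=
  L2 (fun k => Cminus (u k) (v k)) (is_l2_sub u v (lv_sq u) (lv_sq v)).
Definition l2_lincomb (a : C) (u : l2) (b : C) (v : l2) : l2 :=
  L2 (fun k => Cplus (Cmult a (u k)) (Cmult b (v k))) (is_l2_lincomb a u b v (lv_sq u) (lv_sq v)).
Definition l2_zero : l2 := L2 (fun _ => RtoC 0) is_l2_zero.

Definition unit_seq (j : nat) : nat -> C := fun k => if Nat.eqb k j then RtoC 1 else RtoC 0.

Lemma is_l2_unit_seq j : is_l2 (unit_seq j).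
Proof.
  apply (ex_series_finite _ j). intros k Hk. rewrite sqsum_alt. unfold unit_seq.
  destruct (Nat.eqb_spec k j); [lia|]. simpl; ring.
Qed.

Definition l2_unit (j : nat) : l2 := L2 (unit_seq j) (is_l2_unit_seq j).

Lemma inner_unit_r u j : inner u (unit_seq j) = u j.
Proof.
  rewrite inner_alt. destruct (u j) as [a b] eqn:E.
  f_equal; rewrite (Series_single _ j); unfold re_term, im_term, unit_seq;
    try (rewrite Nat.eqb_refl, E; simpl; ring);
    intros k Hk; destruct (Nat.eqb_spec k j); try lia; simpl; ring.
Qed.

Lemma inner_unit_l u j : inner (unit_seq j) u = Cconj (u j).
Proof. rewrite inner_conj, inner_unit_r. auto. Qed.

(** * Bounded operators and their adjoints *)

Lemma op_compat (T : op) (x y : l2) : vec_eq x y -> vec_eq (T x) (T y).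
Proof.
  intros H k. rewrite (op_lin T (RtoC 1) (RtoC 0) y y x); [C_ring|].
  intros j. rewrite H. C_ring.
Qed.

Lemma op_linear_scal (T : op) c (x z : l2) :
  vec_eq z (fun k => Cmult c (x k)) -> vec_eq (T z) (fun k => Cmult c (T x k)).
Proof. intros H k. rewrite (op_lin T c (RtoC 0) x x z); [C_ring|]. intros j; rewrite H; C_ring. Qed.

Lemma op_linear_add (T : op) (x y z : l2) :
  vec_eq z (fun k => Cplus (x k) (y k)) -> vec_eq (T z) (fun k => Cplus (T x k) (T y k)).
Proof. intros H k. rewrite (op_lin T (RtoC 1) (RtoC 1) x y z); [C_ring|]. intros j; rewrite H; C_ring. Qed.

Lemma op_linear_sub (T : op) (x y z : l2) :
  vec_eq z (fun k => Cminus (x k) (y k)) -> vec_eq (T z) (fun k => Cminus (T x k) (T y k)).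
Proof. intros H k. rewrite (op_lin T (RtoC 1) (RtoC (-1)) x y z); [C_ring|]. intros j; rewrite H; C_ring. Qed.

Lemma op_bounded (T : op) : exists M, 0 <= M /\ forall u, vnorm (T u) <= M * vnorm u.
Proof.
  destruct (op_bdd T) as [M HM]. exists (Rmax M 0). split; [apply Rmax_r|].
  intros u. eapply Rle_trans; [apply HM|]. apply Rmult_le_compat_r; [apply vnorm_nonneg|apply Rmax_l].
Qed.

Lemma op_lipschitz (T : op) M : (forall u, vnorm (T u) <= M * vnorm u) -> forall x y : l2,
  vnorm (fun k => Cminus (T x k) (T y k)) <= M * vnorm (fun k => Cminus (x k) (y k)).
Proof.
  intros HM x y. rewrite <- (vnorm_ext (T (l2_sub x y))) by (apply op_linear_sub; intros k; reflexivity).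
  apply (HM (l2_sub x y)).
Qed.

Program Definition zero_op : op := Op (fun _ => l2_zero) _ _.
Next Obligation. simpl. C_ring. Qed.
Next Obligation. exists 0. intros u. simpl. rewrite vnorm_zero. lra. Qed.

Program Definition add_op (S T : op) : op := Op (fun u => l2_add (S u) (T u)) _ _.
Next Obligation. simpl. rewrite (op_lin S c d u v w H), (op_lin T c d u v w H). C_ring. Qed.
Next Obligation.
  destruct (op_bounded S) as [M1 [H1 HM1]], (op_bounded T) as [M2 [H2 HM2]].
  exists (M1 + M2). intros u. simpl. eapply Rle_trans; [apply vnorm_triangle; auto|].
  specialize (HM1 u); specialize (HM2 u). lra.
Qed.

Program Definition scal_op (a : C) (T : op) : op := Op (fun u => l2_scal a (T u)) _ _.
Next Obligation. simpl. rewrite (op_lin T c d u v w H). C_ring. Qed.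
Next Obligation.
  destruct (op_bounded T) as [M [HM0 HM]].
  exists (Cmod a * M). intros u. simpl. rewrite vnorm_scal, Rmult_assoc by auto.
  apply Rmult_le_compat_l; [apply Cmod_ge_0|auto].
Qed.

Program Definition comp_op (S T : op) : op := Op (fun u => S (T u)) _ _.
Next Obligation. apply (op_lin S c d (T u) (T v) (T w)). intros j. apply (op_lin T c d u v w H). Qed.
Next Obligation.
  destruct (op_bounded S) as [M1 [H1 HM1]], (op_bounded T) as [M2 [H2 HM2]].
  exists (M1 * M2). intros u. eapply Rle_trans; [apply HM1|]. rewrite Rmult_assoc.
  apply Rmult_le_compat_l; auto.
Qed.

Definition sub_op (S T : op) : op := add_op S (scal_op (RtoC (-1)) T).

Definition l2_cvg (y : nat -> l2) (w : l2) := forall eps, 0 < eps -> exists N, forall n, (N <= n)%nat ->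
  vnorm (fun k => Cminus (y n k) (w k)) <= eps.

Lemma l2_cvg_op (B : op) y w : l2_cvg y w -> l2_cvg (fun n => B (y n)) (B w).
Proof.
  intros H eps He. destruct (op_bounded B) as [M [HM0 HM]].
  destruct (H (eps / (M + 1))) as [N HN]; [apply Rdiv_lt_0_compat; lra|].
  exists N. intros n Hn. eapply Rle_trans; [apply (op_lipschitz B M HM)|].
  eapply Rle_trans; [|apply (mul_div_succ_le M eps); lra].
  apply Rmult_le_compat_l; auto.
Qed.

Lemma l2_cvg_inner y w (v : l2) : l2_cvg y w ->
  is_lim_seq (fun n => fst (inner (y n) v)) (fst (inner w v)) /\
  is_lim_seq (fun n => snd (inner (y n) v)) (snd (inner w v)).
Proof.
  intros H. assert (Hv0 := vnorm_nonneg v).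
  assert (Hclose : forall eps, 0 < eps -> exists N, forall n, (N <= n)%nat ->
    vnorm (fun k => Cminus (y n k) (w k)) * vnorm v <= eps).
  { intros eps He. destruct (H (eps / (vnorm v + 1))) as [N HN]; [apply Rdiv_lt_0_compat; lra|].
    exists N. intros n Hn. eapply Rle_trans; [|apply (mul_div_succ_le (vnorm v) eps); lra].
    rewrite Rmult_comm. apply Rmult_le_compat_l; auto. }
  assert (Hdiff : forall n, inner (fun k => Cminus (y n k) (w k)) v = Cminus (inner (y n) v) (inner w v))
    by (intros; apply inner_sub; auto).
  split; apply is_lim_seq_of_eps; intros eps He; destruct (Hclose eps He) as [N HN];
    exists N; intros n Hn; eapply Rle_trans; try apply (HN n Hn);
    [replace (fst (inner (y n) v) - fst (inner w v)) with (fst (inner (fun k => Cminus (y n k) (w k)) v))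
       by (rewrite Hdiff; unfold_C; ring); apply cauchy_schwarz_re
    |replace (snd (inner (y n) v) - snd (inner w v)) with (snd (inner (fun k => Cminus (y n k) (w k)) v))
       by (rewrite Hdiff; unfold_C; ring); apply cauchy_schwarz_im]; auto using is_l2_sub.
Qed.

Fixpoint Csum (f : nat -> C) (N : nat) : C :=
  match N with O => f O | S n => Cplus (Csum f n) (f (S n)) end.

Lemma Csum_fst f N : fst (Csum f N) = sum_n (fun k => fst (f k)) N.
Proof. induction N; simpl; [rewrite sum_O; auto|]. rewrite sum_n_succ, <- IHN. auto. Qed.

Lemma Csum_snd f N : snd (Csum f N) = sum_n (fun k => snd (f k)) N.
Proof. induction N; simpl; [rewrite sum_O; auto|]. rewrite sum_n_succ, <- IHN. auto. Qed.

Lemma Csum_ext_le f g N : (forall k, (k <= N)%nat -> f k = g k) -> Csum f N = Csum g N.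
Proof. intros H. induction N; simpl; [apply H; lia|]. rewrite IHN, H; auto. Qed.

Lemma is_l2_Csum (c : nat -> C) (g : nat -> nat -> C) N : (forall k, is_l2 (g k)) ->
  is_l2 (fun j => Csum (fun k => Cmult (c k) (g k j)) N).
Proof. intros H. induction N; simpl; auto using is_l2_scal, is_l2_add. Qed.

Lemma inner_Csum (c : nat -> C) (g : nat -> nat -> C) N v : (forall k, is_l2 (g k)) -> is_l2 v ->
  inner (fun j => Csum (fun k => Cmult (c k) (g k j)) N) v =
  Csum (fun k => Cmult (c k) (inner (g k) v)) N.
Proof.
  intros H Hv. induction N; simpl; [apply inner_scal; auto|].
  rewrite inner_add, IHN, inner_scal; auto using is_l2_Csum, is_l2_scal.
Qed.

Lemma re_mult_conj (c : C) : fst (Cmult c (Cconj c)) = Cmod c ^ 2.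
Proof. rewrite Cmod2_alt. unfold_C. ring. Qed.

Definition truncate (c : nat -> C) (N : nat) : nat -> C :=
  fun k => if Nat.leb k N then c k else RtoC 0.

Lemma is_l2_truncate c N : is_l2 (truncate c N).
Proof.
  apply (ex_series_finite _ N). intros k Hk. rewrite sqsum_alt. unfold truncate.
  destruct (Nat.leb_spec k N); [lia|]. simpl; ring.
Qed.

Definition l2_truncate (c : nat -> C) (N : nat) : l2 := L2 (truncate c N) (is_l2_truncate c N).

Lemma sqnorm_truncate c N : sqnorm (truncate c N) = sum_n (sqsum c) N.
Proof.
  unfold sqnorm. apply is_series_unique. rewrite <- (sum_n_ext_loc (sqsum (truncate c N))).
  - apply is_series_finite. intros k Hk. rewrite sqsum_alt. unfold truncate.
    destruct (Nat.leb_spec k N); [lia|]. simpl; ring.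
  - intros k Hk. unfold sqsum, truncate. destruct (Nat.leb_spec k N); [auto|lia].
Qed.

Lemma sqnorm_truncate_diff u N : is_l2 u ->
  sqnorm (fun k => Cminus (truncate u N k) (u k)) = Series (sqsum u) - sum_n (sqsum u) N.
Proof.
  intros H. set (head := fun k => if Nat.leb k N then sqsum u k else 0).
  set (tail := fun k => if Nat.leb k N then 0 else sqsum u k).
  assert (Hhead : ex_series head /\ Series head = sum_n (sqsum u) N).
  { rewrite <- sqnorm_truncate. split.
    - apply (ex_series_finite _ N). intros k Hk. unfold head. destruct (Nat.leb_spec k N); auto; lia.
    - apply Series_ext. intros k. unfold head, sqsum, truncate. destruct (Nat.leb k N); auto.
      rewrite Cmod_0. simpl; ring. }
  assert (Htail : ex_series tail).
  { apply (ex_series_Rabs_le _ (sqsum u)); auto. intros k. unfold tail.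
    destruct (Nat.leb k N); rewrite Rabs_pos_eq; auto using sqsum_nonneg; lra. }
  destruct Hhead as [Hhex Hheq].
  unfold sqnorm. rewrite (Series_ext _ tail)
    by (intros k; unfold tail; rewrite !sqsum_alt; unfold truncate; destruct (Nat.leb k N); unfold_C; ring).
  rewrite (Series_ext (sqsum u) (fun k => head k + tail k))
    by (intros k; unfold head, tail; destruct (Nat.leb k N); ring).
  rewrite Series_plus, Hheq by auto. ring.
Qed.

Lemma truncate_cvg (u : l2) : l2_cvg (l2_truncate u) u.
Proof.
  intros eps He. destruct (is_lim_seq_eps _ _ (Series_partial_sums _ (l2_is_l2 u)) (eps * eps)) as [N0 HN0];
    [nra|].
  exists N0. intros N HN. specialize (HN0 N HN). apply vnorm_le_sqrt; [lra|].
  simpl. rewrite sqnorm_truncate_diff by auto.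
  assert (Hle : sum_n (sqsum u) N <= Series (sqsum u))
    by (apply sum_n_le_Series; [apply sqsum_nonneg|apply l2_is_l2]).
  rewrite Rabs_left1 in HN0; lra.
Qed.

Lemma op_truncate (T : op) (c : nat -> C) N :
  vec_eq (T (l2_truncate c N)) (fun j => Csum (fun k => Cmult (c k) (T (l2_unit k) j)) N).
Proof.
  induction N; simpl.
  - apply op_linear_scal. intros k. simpl. unfold truncate, unit_seq. destruct k; simpl; C_ring.
  - intros j. rewrite (op_lin T (RtoC 1) (c (S N)) (l2_truncate c N) (l2_unit (S N)) (l2_truncate c (S N))).
    + rewrite IHN. C_ring.
    + intros k. simpl. unfold truncate, unit_seq.
      destruct (Nat.leb_spec k N), (Nat.eqb_spec k (S N)), (Nat.leb_spec k (S N)); try lia; subst; C_ring.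
Qed.

Lemma inner_op_truncate (T : op) (c : nat -> C) N (v : l2) :
  inner (T (l2_truncate c N)) v = Csum (fun k => Cmult (c k) (inner (T (l2_unit k)) v)) N.
Proof.
  rewrite (inner_ext _ (fun j => Csum (fun k => Cmult (c k) (T (l2_unit k) j)) N) v v).
  - apply inner_Csum; auto.
  - apply op_truncate.
  - intros k; auto.
Qed.

(* The candidate adjoint: the [j]-th coordinate of [T* v] must be [<v, T e_j>]. *)
Definition adj_seq (T : op) (v : l2) : nat -> C := fun j => inner v (T (l2_unit j)).

(* Test [T] against the truncation [c_N] of [c := adj_seq T v]:
   [|c_N|^2 = Re <T c_N, v> <= M |c_N| |v|]. *)
Lemma adj_seq_partial_sums (T : op) M : 0 <= M -> (forall u, vnorm (T u) <= M * vnorm u) ->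
  forall v N, sum_n (sqsum (adj_seq T v)) N <= M * M * sqnorm v.
Proof.
  intros HM0 HM v N. set (c := adj_seq T v). set (S := sum_n (sqsum c) N).
  assert (HS0 : 0 <= S) by (apply sum_n_nonneg, sqsum_nonneg).
  assert (E : fst (inner (T (l2_truncate c N)) v) = S).
  { rewrite inner_op_truncate, Csum_fst. apply sum_n_ext. intros k.
    rewrite (inner_conj v). apply re_mult_conj. }
  assert (Hc : vnorm (l2_truncate c N) = sqrt S)
    by (unfold vnorm; simpl; fold (sqnorm (truncate c N)); rewrite sqnorm_truncate; auto).
  assert (H1 := cauchy_schwarz_re (T (l2_truncate c N)) v (lv_sq _) (lv_sq _)).
  assert (H2 := HM (l2_truncate c N)). rewrite E in H1. rewrite Hc in H2.
  assert (HS : S <= (M * vnorm v) * sqrt S).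
  { eapply Rle_trans; [apply Rle_abs|]. eapply Rle_trans; [apply H1|].
    assert (Hv := vnorm_nonneg v). nra. }
  apply le_sqr_of_le_mul_sqrt in HS; auto using Rmult_le_pos, vnorm_nonneg.
  rewrite <- (vnorm_sqr v) by auto. nra.
Qed.

Lemma is_l2_adj_seq (T : op) v : is_l2 (adj_seq T v).
Proof.
  destruct (op_bounded T) as [M [HM0 HM]].
  apply (ex_series_bounded _ (M * M * sqnorm v)); auto using sqsum_nonneg, adj_seq_partial_sums.
Qed.

Lemma adj_bounded (T : op) M : 0 <= M -> (forall u, vnorm (T u) <= M * vnorm u) ->
  forall v : l2, vnorm (adj_seq T v) <= M * vnorm v.
Proof.
  intros HM0 HM v.
  destruct (ex_series_bounded _ _ (sqsum_nonneg _) (adj_seq_partial_sums T M HM0 HM v)) as [_ H].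
  apply vnorm_le_sqrt; [apply Rmult_le_pos; auto using vnorm_nonneg|].
  rewrite <- (vnorm_sqr v) in H by auto. unfold sqnorm. nra.
Qed.

Program Definition adj (T : op) : op := Op (fun v => L2 (adj_seq T v) (is_l2_adj_seq T v)) _ _.
Next Obligation.
  simpl. unfold adj_seq.
  rewrite (inner_ext _ (fun k => Cplus (Cmult c (u k)) (Cmult d (v k))) (T (l2_unit k)) (T (l2_unit k)))
    by (auto; intros j; auto).
  apply inner_lincomb_l; auto.
Qed.
Next Obligation. destruct (op_bounded T) as [M [HM0 HM]]. exists M. intros v. apply adj_bounded; auto. Qed.

(* The partial sums of [<u, T* v>] are [<T u_N, v>] for the truncations [u_N -> u]. *)
Lemma adj_is_adjoint (T : op) : is_adjoint T (adj T).
Proof.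
  intros u v. set (a := adj_seq T v).
  assert (Hpart : forall N, inner (T (l2_truncate u N)) v = (sum_n (re_term u a) N, sum_n (im_term u a) N)).
  { intros N. rewrite inner_op_truncate.
    apply injective_projections; simpl; [rewrite Csum_fst|rewrite Csum_snd];
      apply sum_n_ext; intros k; unfold re_term, im_term, a, adj_seq;
      rewrite (inner_conj v); unfold_C; ring. }
  assert (Ha : is_l2 a) by apply is_l2_adj_seq.
  destruct (l2_cvg_inner _ _ v (l2_cvg_op T _ _ (truncate_cvg u))) as [Hre Him].
  change (inner (T u) v = inner u a). rewrite (inner_alt u a).
  apply injective_projections; simpl.
  - apply (is_lim_seq_eq (sum_n (re_term u a))); [|apply Series_partial_sums, ex_series_re_term; auto].
    refine (is_lim_seq_ext _ _ _ _ Hre). intros N. rewrite Hpart. reflexivity.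
  - apply (is_lim_seq_eq (sum_n (im_term u a))); [|apply Series_partial_sums, ex_series_im_term; auto].
    refine (is_lim_seq_ext _ _ _ _ Him). intros N. rewrite Hpart. reflexivity.
Qed.

(** * Completeness of [l2] *)

Definition l2_cauchy (x : nat -> l2) := forall eps, 0 < eps -> exists N, forall n m,
  (N <= n)%nat -> (N <= m)%nat -> vnorm (fun k => Cminus (x n k) (x m k)) <= eps.

Lemma l2_cauchy_coord_cvg (x : nat -> l2) (j : nat) (coord : C -> R) :
  (forall u, is_l2 u -> forall j, Rabs (coord (u j)) <= vnorm u) ->
  (forall a b, coord (Cminus a b) = coord a - coord b) ->
  l2_cauchy x -> is_lim_seq (fun n => coord (x n j)) (real (Lim_seq (fun n => coord (x n j)))).
Proof.
  intros Hle Hsub Hc. cut (ex_finite_lim_seq (fun n => coord (x n j))).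
  { intros [l Hl]. rewrite (is_lim_seq_unique _ _ Hl). exact Hl. }
  apply ex_lim_seq_cauchy_corr. intros [eps He].
  destruct (Hc (eps / 2)) as [N HN]; [lra|].
  exists N. intros n m Hn Hm. specialize (HN n m Hn Hm). simpl.
  rewrite <- Hsub. eapply Rle_lt_trans; [|apply (Rle_lt_trans _ _ _ HN); lra].
  apply (Hle (fun k => Cminus (x n k) (x m k))); auto using is_l2_sub.
Qed.

Definition pointwise_lim (x : nat -> l2) : nat -> C :=
  fun j => (real (Lim_seq (fun n => fst (x n j))), real (Lim_seq (fun n => snd (x n j)))).

(* Fatou's lemma for the partial sums of [|x_n - x_m|^2] as [m -> oo]. *)
Lemma pointwise_lim_close (x : nat -> l2) : l2_cauchy x ->
  forall eps, 0 < eps -> exists N, forall n, (N <= n)%nat ->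
    is_l2 (fun k => Cminus (x n k) (pointwise_lim x k)) /\
    sqnorm (fun k => Cminus (x n k) (pointwise_lim x k)) <= eps * eps.
Proof.
  intros Hc eps He. set (w := pointwise_lim x).
  assert (Hw : forall j, is_lim_seq (fun n => fst (x n j)) (fst (w j)) /\
                        is_lim_seq (fun n => snd (x n j)) (snd (w j))).
  { intros j. split; apply l2_cauchy_coord_cvg; auto; try (intros; unfold_C; ring);
      intros u Hu i; apply Rabs_coord_le_vnorm; auto. }
  destruct (Hc eps He) as [N HN]. exists N. intros n Hn.
  apply ex_series_bounded; [apply sqsum_nonneg|]. intros K.
  assert (Hl : is_lim_seq (fun m => sum_n (sqsum (fun k => Cminus (x n k) (x m k))) K)
                          (sum_n (sqsum (fun k => Cminus (x n k) (w k))) K)).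
  { apply is_lim_seq_sum_n. intros j. destruct (Hw j) as [Hf Hs].
    apply (is_lim_seq_ext (fun m => (fst (x n j) - fst (x m j)) * (fst (x n j) - fst (x m j))
                                  + (snd (x n j) - snd (x m j)) * (snd (x n j) - snd (x m j))));
      [intros m; rewrite sqsum_alt; unfold_C; ring|].
    replace (sqsum (fun k => Cminus (x n k) (w k)) j)
      with ((fst (x n j) - fst (w j)) * (fst (x n j) - fst (w j))
            + (snd (x n j) - snd (w j)) * (snd (x n j) - snd (w j)))
      by (rewrite sqsum_alt; unfold_C; ring).
    apply is_lim_seq_plus'; apply is_lim_seq_mult'; apply is_lim_seq_minus'; auto using is_lim_seq_const. }
  assert (Hle : Rbar_le (sum_n (sqsum (fun k => Cminus (x n k) (w k))) K) (eps * eps)).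
  { refine (is_lim_seq_le_loc _ (fun _ => eps * eps) _ _ _ Hl (is_lim_seq_const _)).
    exists N. intros m Hm. specialize (HN n m Hn Hm).
    assert (Hd := vnorm_nonneg (fun k => Cminus (x n k) (x m k))).
    eapply Rle_trans; [apply sum_n_le_Series; [apply sqsum_nonneg|apply is_l2_sub; auto]|].
    fold (sqnorm (fun k => Cminus (x n k) (x m k))). rewrite <- vnorm_sqr by (apply is_l2_sub; auto).
    nra. }
  exact Hle.
Qed.

Lemma l2_complete (x : nat -> l2) : l2_cauchy x -> exists w : l2, l2_cvg x w.
Proof.
  intros Hc. destruct (pointwise_lim_close x Hc 1 Rlt_0_1) as [N0 HN0].
  destruct (HN0 N0 (le_n _)) as [Hi _].
  assert (Hw : is_l2 (pointwise_lim x)).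
  { apply (is_l2_ext (fun k => Cminus (x N0 k) (Cminus (x N0 k) (pointwise_lim x k))));
      [intros k; C_ring|apply is_l2_sub; auto]. }
  exists (L2 _ Hw). intros eps He. destruct (pointwise_lim_close x Hc eps He) as [N HN].
  exists N. intros n Hn. destruct (HN n Hn) as [_ H]. apply vnorm_le_sqrt; [lra|exact H].
Qed.

(** * Compact operators and norm limits *)

Definition strict_incr (phi : nat -> nat) := forall n, (phi n < phi (S n))%nat.

Lemma strict_incr_ge phi : strict_incr phi -> forall n, (n <= phi n)%nat.
Proof. intros H n; induction n; [lia|]. specialize (H n). lia. Qed.

Lemma strict_incr_lt phi : strict_incr phi -> forall n m, (n < m)%nat -> (phi n < phi m)%nat.
Proof.
  intros H n m Hnm. induction Hnm as [|m Hm IH]; [apply H|]. specialize (H m). lia.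
Qed.

Lemma strict_incr_comp phi psi : strict_incr phi -> strict_incr psi -> strict_incr (fun n => phi (psi n)).
Proof. intros H1 H2 n. apply strict_incr_lt; auto. Qed.

Lemma l2_cvg_subseq y w psi : l2_cvg y w -> strict_incr psi -> l2_cvg (fun n => y (psi n)) w.
Proof.
  intros H Hp eps He. destruct (H eps He) as [N HN]. exists N. intros n Hn. apply HN.
  assert (H1 := strict_incr_ge psi Hp n). lia.
Qed.

Lemma l2_cvg_cauchy y w : l2_cvg y w -> l2_cauchy y.
Proof.
  intros H eps He. destruct (H (eps / 2)) as [N HN]; [lra|]. exists N. intros n m Hn Hm.
  eapply Rle_trans; [apply (vnorm_sub_triangle _ w); auto|].
  rewrite (vnorm_sub_comm w) by auto. assert (Hn' := HN n Hn). assert (Hm' := HN m Hm). lra.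
Qed.

Lemma compact_ext (K K' : op) : compact_op K -> (forall u, vec_eq (K' u) (K u)) -> compact_op K'.
Proof.
  intros H HE u M HM. destruct (H u M HM) as [phi [w [H1 H2]]]. exists phi, w. split; auto.
  intros eps He. destruct (H2 eps He) as [N HN]. exists N. intros n Hn.
  rewrite (vnorm_ext _ (fun k => Cminus (K (u (phi n)) k) (w k))); auto. intros k; rewrite HE; auto.
Qed.

Lemma compact_zero : compact_op zero_op.
Proof.
  intros u M HM. exists (fun n => n), l2_zero. split; [intros n; lia|].
  intros eps He. exists O. intros n Hn. simpl.
  rewrite (vnorm_ext _ (fun _ => RtoC 0)), vnorm_zero by (intros k; C_ring). lra.
Qed.

Lemma compact_add (K1 K2 : op) : compact_op K1 -> compact_op K2 -> compact_op (add_op K1 K2).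
Proof.
  intros H1 H2 u M HM. destruct (H1 u M HM) as [phi1 [w1 [Hp1 Hc1]]].
  destruct (H2 (fun n => u (phi1 n)) M (fun n => HM (phi1 n))) as [phi2 [w2 [Hp2 Hc2]]].
  exists (fun n => phi1 (phi2 n)), (l2_add w1 w2). split; [apply strict_incr_comp; auto|].
  intros eps He. destruct (l2_cvg_subseq _ _ phi2 Hc1 Hp2 (eps/2)) as [N1 HN1]; [lra|].
  destruct (Hc2 (eps/2)) as [N2 HN2]; [lra|].
  exists (max N1 N2). intros n Hn. simpl.
  rewrite (vnorm_ext _ (fun k => Cplus (Cminus (K1 (u (phi1 (phi2 n))) k) (w1 k))
                                       (Cminus (K2 (u (phi1 (phi2 n))) k) (w2 k)))) by (intros k; C_ring).
  eapply Rle_trans; [apply vnorm_triangle; apply is_l2_sub; auto|].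
  specialize (HN1 n ltac:(lia)). specialize (HN2 n ltac:(lia)). simpl in HN1. lra.
Qed.

Lemma compact_comp_l (B K : op) : compact_op K -> compact_op (comp_op B K).
Proof.
  intros H u M HM. destruct (H u M HM) as [phi [w [Hp Hc]]].
  exists phi, (B w). split; auto. apply (l2_cvg_op B (fun n => K (u (phi n))) w Hc).
Qed.

Lemma compact_comp_r (K B : op) : compact_op K -> compact_op (comp_op K B).
Proof.
  intros H u M HM. destruct (op_bounded B) as [MB [HB0 HB]].
  apply (H (fun n => B (u n)) (MB * M)). intros n.
  eapply Rle_trans; [apply HB|]. apply Rmult_le_compat_l; auto.
Qed.

Lemma compact_scal c (K : op) : compact_op K -> compact_op (scal_op c K).
Proof.
  intros H u M HM. destruct (H u M HM) as [phi [w [Hp Hc]]].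
  exists phi, (l2_scal c w). split; auto.
  intros eps He. assert (Hc0 := Cmod_ge_0 c).
  destruct (Hc (eps / (Cmod c + 1))) as [N HN]; [apply Rdiv_lt_0_compat; lra|].
  exists N. intros n Hn. simpl.
  rewrite (vnorm_ext _ (fun k => Cmult c (Cminus (K (u (phi n)) k) (w k)))) by (intros k; C_ring).
  rewrite vnorm_scal by (apply is_l2_sub; auto).
  eapply Rle_trans; [|apply (mul_div_succ_le (Cmod c) eps); lra].
  apply Rmult_le_compat_l; auto.
Qed.

Lemma sqnorm_adj_le (K : op) (x : l2) : sqnorm (adj K x) <= vnorm (K (adj K x)) * vnorm x.
Proof.
  rewrite <- (Rabs_pos_eq (sqnorm (adj K x))) by (apply sqnorm_nonneg; auto).
  replace (sqnorm (adj K x)) with (fst (inner (K (adj K x)) x)); [apply cauchy_schwarz_re; auto|].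
  rewrite (adj_is_adjoint K (adj K x) x), inner_self by auto. reflexivity.
Qed.

(* Schauder: [|K* x|^2 <= |K K* x| |x|], so [K* u_n] is Cauchy along a subsequence on which
   [K K* u_n] converges. *)
Lemma compact_adj (K : op) : compact_op K -> compact_op (adj K).
Proof.
  intros H u M HM. set (W := adj K).
  destruct (compact_comp_r K W H u M HM) as [phi [z [Hp Hc]]].
  assert (HM0 : 0 <= M) by (eapply Rle_trans; [apply vnorm_nonneg|apply (HM O)]).
  assert (Hcau : l2_cauchy (fun n => W (u (phi n)))).
  { intros eps He.
    destruct (l2_cvg_cauchy _ _ Hc (eps * eps / (2 * (M + 1)))) as [N HN]; [apply Rdiv_lt_0_compat; nra|].
    exists N. intros a b Ha Hb.
    set (x := l2_sub (u (phi a)) (u (phi b))).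
    assert (E1 : vec_eq (W x) (fun k => Cminus (W (u (phi a)) k) (W (u (phi b)) k)))
      by (apply op_linear_sub; intros k; reflexivity).
    assert (E2 : vec_eq (K (W x)) (fun k => Cminus (K (W (u (phi a))) k) (K (W (u (phi b))) k)))
      by (apply op_linear_sub; intros k; apply E1).
    assert (Hx : vnorm x <= 2 * M).
    { eapply Rle_trans; [apply vnorm_sub_le; auto|].
      assert (HMa := HM (phi a)); assert (HMb := HM (phi b)). lra. }
    assert (Hk : vnorm (K (W x)) <= eps * eps / (2 * (M + 1)))
      by (rewrite (vnorm_ext _ _ E2); apply HN; auto).
    assert (HWx : sqnorm (W x) <= eps * eps).
    { eapply Rle_trans; [apply sqnorm_adj_le|].
      eapply Rle_trans; [apply Rmult_le_compat; eauto using vnorm_nonneg|].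
      replace (eps * eps / (2 * (M + 1)) * (2 * M)) with (M * (eps * eps / (M + 1))) by (field; lra).
      apply mul_div_succ_le; nra. }
    rewrite <- (vnorm_ext _ _ E1). apply vnorm_le_sqrt; [lra|exact HWx]. }
  destruct (l2_complete _ Hcau) as [w Hw]. exists phi, w. split; auto.
Qed.

Section DiagonalSubsequence.

Variable Kn : nat -> op.
Variable u : nat -> l2.
Variable M : R.
Hypothesis HK : forall m, compact_op (Kn m).
Hypothesis HM : forall n, vnorm (u n) <= M.

Definition choose_subseq (m : nat) (v : nat -> l2) : nat -> nat :=
  epsilon (inhabits (fun n : nat => n))
    (fun phi => strict_incr phi /\ exists w : l2, l2_cvg (fun n => Kn m (v (phi n))) w).

Lemma choose_subseq_spec m (v : nat -> l2) : (forall n, vnorm (v n) <= M) ->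
  strict_incr (choose_subseq m v) /\ exists w, l2_cvg (fun n => Kn m (v (choose_subseq m v n))) w.
Proof.
  intros Hv. unfold choose_subseq.
  apply (epsilon_spec (inhabits (fun n : nat => n))
    (fun phi => strict_incr phi /\ exists w : l2, l2_cvg (fun n => Kn m (v (phi n))) w)).
  destruct (HK m v M Hv) as [phi [w [H1 H2]]]. exists phi. split; eauto.
Qed.

(* [nested_subseq m] is a subsequence of [nested_subseq m'] for [m' <= m] along which
   [Kn m u] converges. *)
Fixpoint nested_subseq (m : nat) : nat -> nat :=
  match m with
  | O => choose_subseq O u
  | S m' => fun n => nested_subseq m' (choose_subseq (S m') (fun k => u (nested_subseq m' k)) n)
  end.

Lemma choose_subseq_nested_spec m :
  strict_incr (choose_subseq (S m) (fun k => u (nested_subseq m k))) /\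
  exists w, l2_cvg (fun n => Kn (S m) (u (nested_subseq (S m) n))) w.
Proof. apply choose_subseq_spec. intros; apply HM. Qed.

Lemma nested_subseq_spec m :
  strict_incr (nested_subseq m) /\ exists w, l2_cvg (fun n => Kn m (u (nested_subseq m n))) w.
Proof.
  induction m as [|m [Hs _]].
  - apply choose_subseq_spec. exact HM.
  - destruct (choose_subseq_nested_spec m) as [Hs2 Hc].
    split; [exact (strict_incr_comp _ _ Hs Hs2)|exact Hc].
Qed.

Lemma nested_subseq_tail j m n : exists k, (n <= k)%nat /\ nested_subseq (j + m) n = nested_subseq m k.
Proof.
  revert n. induction j as [|j IHj]; intros n; [exists n; split; auto|].
  destruct (choose_subseq_nested_spec (j + m)) as [Hs _].
  destruct (IHj (choose_subseq (S (j + m)) (fun k => u (nested_subseq (j + m) k)) n)) as [k [Hk E]].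
  exists k. split; [assert (H := strict_incr_ge _ Hs n); lia|exact E].
Qed.

Definition diagonal_subseq (n : nat) : nat := nested_subseq n n.

Lemma diagonal_subseq_strict_incr : strict_incr diagonal_subseq.
Proof.
  intros n. unfold diagonal_subseq. simpl.
  destruct (choose_subseq_nested_spec n) as [Hs _], (nested_subseq_spec n) as [Hp _].
  apply strict_incr_lt; auto. assert (H := strict_incr_ge _ Hs (S n)). lia.
Qed.

Lemma diagonal_subseq_tail m n : (m <= n)%nat ->
  exists k, (n <= k)%nat /\ diagonal_subseq n = nested_subseq m k.
Proof.
  intros Hmn. destruct (nested_subseq_tail (n - m) m n) as [k [Hk E]].
  replace (n - m + m)%nat with n in E by lia. exists k; auto.
Qed.

End DiagonalSubsequence.

(* A [3 eps] argument along the diagonal subsequence. *)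
Lemma compact_limit (Kn : nat -> op) (K : op) :
  (forall m, compact_op (Kn m)) -> op_norm_cvg Kn K -> compact_op K.
Proof.
  intros HK Hcv u M HM. set (d := diagonal_subseq Kn u).
  assert (HM0 : 0 <= M) by (eapply Rle_trans; [apply vnorm_nonneg|apply (HM O)]).
  assert (Hcau : l2_cauchy (fun n => K (u (d n)))).
  { intros eps He. set (e1 := eps / 4).
    destruct (Hcv (e1 / (M + 1))) as [m Hm]; [apply Rdiv_lt_0_compat; unfold e1; lra|].
    assert (Hmv : forall x : l2, vnorm x <= M -> vnorm (fun k => Cminus (Kn m x k) (K x k)) <= e1).
    { intros x Hx. eapply Rle_trans; [apply Hm; lia|].
      eapply Rle_trans; [|apply (mul_div_succ_le M e1); unfold e1; lra].
      rewrite (Rmult_comm M). apply Rmult_le_compat_l; [apply Rdiv_le_0_compat; unfold e1; lra|exact Hx]. }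
    destruct (nested_subseq_spec Kn u M HK HM m) as [_ [w Hw]].
    destruct (Hw e1) as [N HN]; [unfold e1; lra|].
    exists (max m N). intros a b Ha Hb.
    unfold d. destruct (diagonal_subseq_tail Kn u M HK HM m a) as [ka [Hka ->]]; [lia|].
    destruct (diagonal_subseq_tail Kn u M HK HM m b) as [kb [Hkb ->]]; [lia|].
    set (xa := u (nested_subseq Kn u m ka)). set (xb := u (nested_subseq Kn u m kb)).
    assert (A1 : vnorm (fun k => Cminus (K xa k) (Kn m xa k)) <= e1)
      by (rewrite vnorm_sub_comm by auto; apply Hmv, HM).
    assert (A2 : vnorm (fun k => Cminus (Kn m xa k) (w k)) <= e1) by (apply HN; lia).
    assert (A3 : vnorm (fun k => Cminus (w k) (Kn m xb k)) <= e1)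
      by (rewrite vnorm_sub_comm by auto; apply HN; lia).
    assert (A4 : vnorm (fun k => Cminus (Kn m xb k) (K xb k)) <= e1) by (apply Hmv, HM).
    assert (T1 := vnorm_sub_triangle (K xa) (Kn m xa) (K xb) (lv_sq _) (lv_sq _) (lv_sq _)).
    assert (T2 := vnorm_sub_triangle (Kn m xa) w (K xb) (lv_sq _) (lv_sq _) (lv_sq _)).
    assert (T3 := vnorm_sub_triangle w (Kn m xb) (K xb) (lv_sq _) (lv_sq _) (lv_sq _)).
    unfold e1 in *. lra. }
  destruct (l2_complete _ Hcau) as [w Hw]. exists d, w.
  split; [exact (diagonal_subseq_strict_incr Kn u M HK HM)|exact Hw].
Qed.

Lemma op_norm_cvg_add (An Bn : nat -> op) A B : op_norm_cvg An A -> op_norm_cvg Bn B ->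
  op_norm_cvg (fun n => add_op (An n) (Bn n)) (add_op A B).
Proof.
  intros H1 H2 eps He. destruct (H1 (eps/2)) as [N1 HN1]; [lra|]. destruct (H2 (eps/2)) as [N2 HN2]; [lra|].
  exists (max N1 N2). intros n Hn u. cbn [app add_op l2_add lv].
  rewrite (vnorm_ext _ (fun k => Cplus (Cminus (An n u k) (A u k)) (Cminus (Bn n u k) (B u k))))
    by (intros k; C_ring).
  eapply Rle_trans; [apply vnorm_triangle; apply is_l2_sub; auto|].
  specialize (HN1 n ltac:(lia) u). specialize (HN2 n ltac:(lia) u). lra.
Qed.

Lemma op_norm_cvg_comp_l (A : op) (Tn : nat -> op) T : op_norm_cvg Tn T ->
  op_norm_cvg (fun n => comp_op A (Tn n)) (comp_op A T).
Proof.
  intros H eps He. destruct (op_bounded A) as [MA [HA0 HA]].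
  destruct (H (eps / (MA + 1))) as [N HN]; [apply Rdiv_lt_0_compat; lra|].
  exists N. intros n Hn u. cbn [app comp_op].
  eapply Rle_trans; [apply (op_lipschitz A MA HA)|].
  eapply Rle_trans; [apply Rmult_le_compat_l, HN; auto|].
  rewrite <- Rmult_assoc. apply Rmult_le_compat_r; [apply vnorm_nonneg|].
  apply mul_div_succ_le; lra.
Qed.

Lemma op_norm_cvg_comp_r (Tn : nat -> op) T (B : op) : op_norm_cvg Tn T ->
  op_norm_cvg (fun n => comp_op (Tn n) B) (comp_op T B).
Proof.
  intros H eps He. destruct (op_bounded B) as [MB [HB0 HB]].
  destruct (H (eps / (MB + 1))) as [N HN]; [apply Rdiv_lt_0_compat; lra|].
  exists N. intros n Hn u. cbn [app comp_op].
  eapply Rle_trans; [apply HN; auto|].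
  eapply Rle_trans; [apply Rmult_le_compat_l, HB; apply Rlt_le, Rdiv_lt_0_compat; lra|].
  rewrite <- Rmult_assoc. apply Rmult_le_compat_r; [apply vnorm_nonneg|].
  rewrite Rmult_comm. apply mul_div_succ_le; lra.
Qed.

Lemma op_norm_cvg_apply (Tn : nat -> op) T (u : l2) : op_norm_cvg Tn T -> l2_cvg (fun n => Tn n u) (T u).
Proof.
  intros H eps He. assert (Hu := vnorm_nonneg u).
  destruct (H (eps / (vnorm u + 1))) as [N HN]; [apply Rdiv_lt_0_compat; lra|].
  exists N. intros n Hn. eapply Rle_trans; [apply HN; auto|].
  rewrite Rmult_comm. apply mul_div_succ_le; lra.
Qed.

Lemma l2_cvg_inner_eq_0 y w (v : l2) : l2_cvg y w -> (forall n, inner (y n) v = RtoC 0) ->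
  inner w v = RtoC 0.
Proof.
  intros H Hz. destruct (l2_cvg_inner y w v H) as [Hre Him].
  assert (Hconst : forall (a : nat -> R) (l : R), (forall n, a n = 0) -> is_lim_seq a l -> l = 0).
  { intros a l Ha Hl. apply (is_lim_seq_eq a); auto.
    apply (is_lim_seq_ext (fun _ => 0)); [intros; auto|apply is_lim_seq_const]. }
  unfold RtoC. apply injective_projections; simpl.
  - apply (Hconst _ _ (fun n => f_equal fst (Hz n)) Hre).
  - apply (Hconst _ _ (fun n => f_equal snd (Hz n)) Him).
Qed.

Lemma l2_cvg_eq_0 y w : l2_cvg y w -> (forall n, vec_eq (y n) (fun _ => RtoC 0)) ->
  vec_eq w (fun _ => RtoC 0).
Proof.
  intros H Hz j. apply vnorm_eq_0; auto.
  assert (Hsmall : forall eps, 0 < eps -> Rabs (vnorm w) <= eps).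
  { intros eps He. destruct (H eps He) as [N HN]. specialize (HN N (le_n _)).
    rewrite (vnorm_ext _ (fun k => Cmult (RtoC (-1)) (w k))), vnorm_scal, Cmod_R in HN
      by (auto || (intros k; rewrite Hz; C_ring)).
    rewrite Rabs_pos_eq by apply vnorm_nonneg. rewrite Rabs_left in HN by lra. lra. }
  apply Rabs_le_eps_eq_0, Hsmall.
Qed.

(** * Orthonormal sequences and bases *)

Lemma ONB_vec_eq (e : nat -> l2) (He : is_ONB e) (x y : l2) :
  (forall k, inner x (e k) = inner y (e k)) -> vec_eq x y.
Proof.
  intros H j. destruct He as [_ Hcomplete].
  assert (Z : Cminus (x j) (y j) = RtoC 0).
  { apply (Hcomplete (l2_sub x y)). intros k. simpl. rewrite inner_sub, H by auto. C_ring. }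
  destruct (x j), (y j). unfold_C. injection Z; intros; f_equal; lra.
Qed.

(* Compare the adjoints on the basis first: [<A* e_k, e_j> = conj <A e_j, e_k>]. *)
Lemma ONB_op_eq (e : nat -> l2) (He : is_ONB e) (A B : op) :
  (forall m, vec_eq (A (e m)) (B (e m))) -> forall u, vec_eq (A u) (B u).
Proof.
  intros H u. apply (ONB_vec_eq e He). intros k.
  assert (Hw : vec_eq (adj A (e k)) (adj B (e k))).
  { apply (ONB_vec_eq e He). intros j.
    rewrite (inner_conj (e j)), (inner_conj (e j) (adj B (e k))).
    rewrite <- (adj_is_adjoint A), <- (adj_is_adjoint B). f_equal. apply inner_ext; auto. intros i; auto. }
  rewrite (adj_is_adjoint A), (adj_is_adjoint B). apply inner_ext; auto. intros i; auto.
Qed.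

Definition kron (i j : nat) : C := if Nat.eqb i j then RtoC 1 else RtoC 0.

Lemma Csum_kron (c : nat -> C) m N :
  Csum (fun k => Cmult (c k) (kron k m)) N = if Nat.leb m N then c m else RtoC 0.
Proof.
  induction N; simpl.
  - unfold kron. destruct m; simpl; C_ring.
  - rewrite IHN. unfold kron.
    destruct (Nat.leb_spec m N), (Nat.eqb_spec (S N) m), (Nat.leb_spec m (S N)); try lia; subst; C_ring.
Qed.

Lemma sqsum_mult_le (d : nat -> R) (Hd : forall k, 0 <= d k <= 1) u k :
  sqsum (fun k => Cmult (RtoC (d k)) (u k)) k <= sqsum u k.
Proof.
  rewrite !sqsum_alt. specialize (Hd k). unfold_C. destruct (u k) as [a b]; simpl.
  replace ((d k * a - 0 * b) ^ 2 + (d k * b + 0 * a) ^ 2) with ((d k * d k) * (a ^ 2 + b ^ 2)) by ring.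
  assert (0 <= a ^ 2) by apply pow2_ge_0. assert (0 <= b ^ 2) by apply pow2_ge_0.
  assert (d k * d k <= 1) by nra. nra.
Qed.

Lemma is_l2_mult (d : nat -> R) (Hd : forall k, 0 <= d k <= 1) (u : l2) :
  is_l2 (fun k => Cmult (RtoC (d k)) (u k)).
Proof.
  apply (ex_series_Rabs_le _ (sqsum u)); [|apply l2_is_l2].
  intros k. rewrite Rabs_pos_eq by apply sqsum_nonneg. apply sqsum_mult_le, Hd.
Qed.

Program Definition mult_op (d : nat -> R) (Hd : forall k, 0 <= d k <= 1) : op :=
  Op (fun u => L2 (fun k => Cmult (RtoC (d k)) (u k)) (is_l2_mult d Hd u)) _ _.
Next Obligation. simpl. rewrite H. C_ring. Qed.
Next Obligation.
  exists 1. intros u. rewrite Rmult_1_l. unfold vnorm. apply sqrt_le_1_alt. simpl.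
  apply Series_le; [|apply l2_is_l2]. intros k. split; [apply sqsum_nonneg|apply sqsum_mult_le, Hd].
Qed.

Section Orthonormal.

Variable f : nat -> l2.
Hypothesis Hf : forall k j, inner (f k) (f j) = kron k j.

(* Pythagoras for [x := sum_(k <= N) <u, f_k> f_k]: [|x|^2 = Re <u, x> <= |u| |x|]. *)
Lemma bessel (u : l2) N : sum_n (sqsum (fun k => inner u (f k))) N <= sqnorm u.
Proof.
  set (c := fun k => inner u (f k)).
  set (x := fun j => Csum (fun k => Cmult (c k) (f k j)) N).
  assert (Hx : is_l2 x) by (apply is_l2_Csum; auto).
  set (S := sum_n (sqsum c) N).
  assert (HS0 : 0 <= S) by (apply sum_n_nonneg, sqsum_nonneg).
  assert (Hsqsum : forall k, fst (Cmult (c k) (Cconj (c k))) = sqsum c k)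
    by (intros k; unfold sqsum; rewrite re_mult_conj; reflexivity).
  assert (Hxf : forall m, (m <= N)%nat -> inner x (f m) = c m).
  { intros m Hm. unfold x. rewrite inner_Csum by auto.
    rewrite (Csum_ext_le _ (fun k => Cmult (c k) (kron k m))) by (intros k _; rewrite Hf; auto).
    rewrite Csum_kron. destruct (Nat.leb_spec m N); auto; lia. }
  assert (E1 : fst (inner u x) = S).
  { rewrite inner_conj. unfold x. rewrite inner_Csum by auto. simpl.
    rewrite Csum_fst. apply sum_n_ext. intros k. rewrite <- Hsqsum.
    rewrite (inner_conj u (fun j => f k j)). unfold_C. ring. }
  assert (E2 : sqnorm x = S).
  { assert (H := f_equal fst (inner_self x Hx)). cbn [fst RtoC] in H. rewrite <- H.
    unfold x at 1. rewrite inner_Csum by auto.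
    rewrite (Csum_ext_le _ (fun k => Cmult (c k) (Cconj (c k)))).
    - rewrite Csum_fst. apply sum_n_ext. apply Hsqsum.
    - intros k Hk. rewrite (inner_conj x (fun j => f k j)).
      change (inner x (fun j => f k j)) with (inner x (f k)). rewrite Hxf; auto. }
  assert (H1 := cauchy_schwarz_re u x (lv_sq u) Hx). rewrite E1 in H1.
  unfold vnorm at 2 in H1. fold (sqnorm x) in H1. rewrite E2 in H1.
  assert (HSu : S <= vnorm u * vnorm u).
  { apply le_sqr_of_le_mul_sqrt; auto using vnorm_nonneg. eapply Rle_trans; [apply Rle_abs|exact H1]. }
  rewrite <- (vnorm_sqr u) by auto. simpl. lra.
Qed.

Lemma is_l2_analysis (u : l2) : is_l2 (fun k => inner u (f k)).
Proof. apply (ex_series_bounded _ (sqnorm u)); [apply sqsum_nonneg|apply bessel]. Qed.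

Program Definition analysis : op := Op (fun u => L2 (fun k => inner u (f k)) (is_l2_analysis u)) _ _.
Next Obligation. rewrite (inner_ext w _ (f k) (f k) H (fun _ => eq_refl)). apply inner_lincomb_l; auto. Qed.
Next Obligation.
  exists 1. intros u. rewrite Rmult_1_l. unfold vnorm. apply sqrt_le_1_alt.
  destruct (ex_series_bounded _ (sqnorm u) (sqsum_nonneg _) (bessel u)) as [_ H]. exact H.
Qed.

Lemma analysis_f k : vec_eq (analysis (f k)) (unit_seq k).
Proof. intros j. simpl. rewrite Hf. unfold kron, unit_seq. rewrite Nat.eqb_sym. auto. Qed.

Lemma adj_analysis_unit m : vec_eq (adj analysis (l2_unit m)) (f m).
Proof. intros j. simpl. unfold adj_seq. simpl. rewrite !inner_unit_l. C_ring. Qed.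

Definition diag_op (d : nat -> R) (Hd : forall k, 0 <= d k <= 1) : op :=
  comp_op (adj analysis) (comp_op (mult_op d Hd) analysis).

Lemma diag_op_f d Hd k : vec_eq (diag_op d Hd (f k)) (fun j => Cmult (RtoC (d k)) (f k j)).
Proof.
  intros j. unfold diag_op. simpl (comp_op _ _ _).
  rewrite (op_linear_scal (adj analysis) (RtoC (d k)) (l2_unit k) (mult_op d Hd (analysis (f k)))).
  - rewrite adj_analysis_unit. auto.
  - intros i. change (lv (mult_op d Hd (analysis (f k))) i) with (Cmult (RtoC (d i)) (analysis (f k) i)).
    rewrite (analysis_f k i).
    cbn [lv l2_unit]. unfold unit_seq. destruct (Nat.eqb_spec i k); [subst; reflexivity|C_ring].
Qed.

End Orthonormal.

(** * The blocks [H_n] and block matrices *)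

Lemma Cconj_RtoC r : Cconj (RtoC r) = RtoC r.
Proof. C_ring. Qed.

Lemma block_of k : exists n, in_block k n.
Proof.
  exists (Nat.div2 k). unfold in_block.
  destruct (Nat.Even_or_Odd k) as [[m Hm]|[m Hm]]; subst;
    [rewrite Nat.div2_double|rewrite Nat.div2_odd']; lia.
Qed.

Lemma in_block_dec i n : in_block i n \/ (i <> (2 * n)%nat /\ i <> (2 * n + 1)%nat).
Proof. unfold in_block. lia. Qed.

Section Blocks.

Variable e : nat -> l2.
Hypothesis He : is_ONB e.
Variable alpha : R.
Hypothesis Halpha : alpha ^ 2 <= 1.
Variable X : nat -> Prop.

Definition beta := sqrt (1 - alpha ^ 2).

Lemma alpha_beta_sqr : alpha * alpha + beta * beta = 1.
Proof. unfold beta. rewrite sqrt_sqrt; [ring|lra]. Qed.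

Definition f_even n := l2_lincomb (RtoC alpha) (e (2 * n)%nat) (RtoC beta) (e (2 * n + 1)%nat).
Definition f_odd n := l2_lincomb (RtoC beta) (e (2 * n)%nat) (RtoC (- alpha)) (e (2 * n + 1)%nat).

Lemma inner_e_e i j : inner (e i) (e j) = kron i j.
Proof. destruct He as [H _]. rewrite H. unfold kron. auto. Qed.

Ltac kron_cases :=
  unfold kron; repeat match goal with |- context [Nat.eqb ?a ?b] => destruct (Nat.eqb_spec a b); try lia end.

Lemma inner_f_even_e n j : inner (f_even n) (e j) =
  Cplus (Cmult (RtoC alpha) (kron (2 * n) j)) (Cmult (RtoC beta) (kron (2 * n + 1) j)).
Proof. unfold f_even. cbn [lv l2_lincomb]. rewrite inner_lincomb_l, !inner_e_e by auto. auto. Qed.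

Lemma inner_f_odd_e n j : inner (f_odd n) (e j) =
  Cplus (Cmult (RtoC beta) (kron (2 * n) j)) (Cmult (RtoC (- alpha)) (kron (2 * n + 1) j)).
Proof. unfold f_odd. cbn [lv l2_lincomb]. rewrite inner_lincomb_l, !inner_e_e by auto. auto. Qed.

Lemma inner_f_even_even n m : inner (f_even n) (f_even m) = kron n m.
Proof.
  unfold f_even at 2. cbn [lv l2_lincomb]. rewrite inner_lincomb_r, !inner_f_even_e, !Cconj_RtoC by auto.
  assert (H := alpha_beta_sqr). kron_cases; apply injective_projections; unfold_C; nra.
Qed.

Lemma inner_f_odd_odd n m : inner (f_odd n) (f_odd m) = kron n m.
Proof.
  unfold f_odd at 2. cbn [lv l2_lincomb]. rewrite inner_lincomb_r, !inner_f_odd_e, !Cconj_RtoC by auto.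
  assert (H := alpha_beta_sqr). kron_cases; apply injective_projections; unfold_C; nra.
Qed.

Lemma inner_f_even_odd n m : inner (f_even n) (f_odd m) = RtoC 0.
Proof.
  unfold f_odd. cbn [lv l2_lincomb]. rewrite inner_lincomb_r, !inner_f_even_e, !Cconj_RtoC by auto.
  kron_cases; apply injective_projections; unfold_C; nra.
Qed.

Lemma inner_f_odd_even n m : inner (f_odd n) (f_even m) = RtoC 0.
Proof. rewrite inner_conj, inner_f_even_odd. C_ring. Qed.

Lemma e_even_in_f n : vec_eq (e (2 * n)%nat)
  (fun k => Cplus (Cmult (RtoC alpha) (f_even n k)) (Cmult (RtoC beta) (f_odd n k))).
Proof.
  intros k. unfold f_even, f_odd. cbn [lv l2_lincomb]. assert (H := alpha_beta_sqr).
  destruct (e (2 * n)%nat k) as [x y], (e (2 * n + 1)%nat k).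
  apply injective_projections; unfold_C.
  - transitivity ((alpha * alpha + beta * beta) * x); [rewrite H|]; ring.
  - transitivity ((alpha * alpha + beta * beta) * y); [rewrite H|]; ring.
Qed.

Lemma e_odd_in_f n : vec_eq (e (2 * n + 1)%nat)
  (fun k => Cplus (Cmult (RtoC beta) (f_even n k)) (Cmult (RtoC (- alpha)) (f_odd n k))).
Proof.
  intros k. unfold f_even, f_odd. cbn [lv l2_lincomb]. assert (H := alpha_beta_sqr).
  destruct (e (2 * n)%nat k), (e (2 * n + 1)%nat k) as [x y].
  apply injective_projections; unfold_C.
  - transitivity ((alpha * alpha + beta * beta) * x); [rewrite H|]; ring.
  - transitivity ((alpha * alpha + beta * beta) * y); [rewrite H|]; ring.
Qed.

Lemma op_e_even (T : op) n : vec_eq (T (e (2 * n)%nat))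
  (fun k => Cplus (Cmult (RtoC alpha) (T (f_even n) k)) (Cmult (RtoC beta) (T (f_odd n) k))).
Proof. exact (op_lin T _ _ (f_even n) (f_odd n) _ (e_even_in_f n)). Qed.

Lemma op_e_odd (T : op) n : vec_eq (T (e (2 * n + 1)%nat))
  (fun k => Cplus (Cmult (RtoC beta) (T (f_even n) k)) (Cmult (RtoC (- alpha)) (T (f_odd n) k))).
Proof. exact (op_lin T _ _ (f_even n) (f_odd n) _ (e_odd_in_f n)). Qed.

Lemma block_expansion (x : l2) n :
  (forall j, j <> (2 * n)%nat -> j <> (2 * n + 1)%nat -> inner x (e j) = RtoC 0) ->
  vec_eq x (fun k => Cplus (Cmult (inner x (f_even n)) (f_even n k)) (Cmult (inner x (f_odd n)) (f_odd n k))).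
Proof.
  intros H.
  apply (ONB_vec_eq e He x (l2_lincomb (inner x (f_even n)) (f_even n) (inner x (f_odd n)) (f_odd n))).
  intros j. cbn [lv l2_lincomb]. rewrite inner_lincomb_l, inner_f_even_e, inner_f_odd_e by auto.
  destruct (in_block_dec j n) as [[-> | ->]|[H1 H2]].
  - rewrite (inner_ext x x (e (2 * n)%nat) _ (fun k => eq_refl) (e_even_in_f n)).
    rewrite inner_lincomb_r, !Cconj_RtoC by auto. kron_cases. C_ring.
  - rewrite (inner_ext x x (e (2 * n + 1)%nat) _ (fun k => eq_refl) (e_odd_in_f n)).
    rewrite inner_lincomb_r, !Cconj_RtoC by auto. kron_cases. C_ring.
  - rewrite H by auto. kron_cases. C_ring.
Qed.

Definition fbasis k : l2 := if Nat.even k then f_even (Nat.div2 k) else f_odd (Nat.div2 k).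

Lemma fbasis_even n : fbasis (2 * n) = f_even n.
Proof. unfold fbasis. rewrite Nat.even_even, Nat.div2_double. auto. Qed.

Lemma fbasis_odd n : fbasis (2 * n + 1) = f_odd n.
Proof. unfold fbasis. rewrite Nat.even_odd, Nat.div2_odd'. auto. Qed.

Lemma fbasis_orthonormal k j : inner (fbasis k) (fbasis j) = kron k j.
Proof.
  destruct (block_of k) as [n [-> | ->]], (block_of j) as [m [-> | ->]];
    rewrite ?fbasis_even, ?fbasis_odd, ?inner_f_even_even, ?inner_f_odd_odd,
      ?inner_f_even_odd, ?inner_f_odd_even; kron_cases; auto.
Qed.

(* [block_matrix T p q r s]: on [H_n], in the basis [(f_even n, f_odd n)], [T] has the matrix
   [[p n, r n], [q n, s n]], which vanishes when [n] is not in [X]. *)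
Definition block_matrix (T : op) (p q r s : nat -> C) : Prop := forall n,
  vec_eq (T (f_even n)) (fun k => Cplus (Cmult (p n) (f_even n k)) (Cmult (q n) (f_odd n k))) /\
  vec_eq (T (f_odd n)) (fun k => Cplus (Cmult (r n) (f_even n k)) (Cmult (s n) (f_odd n k))) /\
  (~ X n -> p n = RtoC 0 /\ q n = RtoC 0 /\ r n = RtoC 0 /\ s n = RtoC 0).

Definition in_span_f n (y : nat -> C) :=
  exists a b, vec_eq y (fun k => Cplus (Cmult a (f_even n k)) (Cmult b (f_odd n k))).

Lemma in_span_f_inner_e n y j : in_span_f n y -> j <> (2 * n)%nat -> j <> (2 * n + 1)%nat ->
  inner y (e j) = RtoC 0.
Proof.
  intros [a [b H]] H1 H2. rewrite (inner_ext y _ (e j) (e j) H (fun _ => eq_refl)).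
  rewrite inner_lincomb_l, inner_f_even_e, inner_f_odd_e by auto. kron_cases. C_ring.
Qed.

Lemma in_span_f_coef n y a b : vec_eq y (fun k => Cplus (Cmult a (f_even n k)) (Cmult b (f_odd n k))) ->
  inner y (f_even n) = a /\ inner y (f_odd n) = b.
Proof.
  intros H. rewrite !(inner_ext y _ _ _ H (fun _ => eq_refl)), !inner_lincomb_l by auto.
  rewrite inner_f_even_even, inner_f_odd_odd, inner_f_even_odd, inner_f_odd_even. kron_cases. split; C_ring.
Qed.

Lemma in_span_f_orth n' n y : in_span_f n' y -> n' <> n ->
  inner y (f_even n) = RtoC 0 /\ inner y (f_odd n) = RtoC 0.
Proof.
  intros [a [b H]] Hn. rewrite !(inner_ext y _ _ _ H (fun _ => eq_refl)), !inner_lincomb_l by auto.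
  rewrite inner_f_even_even, inner_f_odd_odd, inner_f_even_odd, inner_f_odd_even. kron_cases. split; C_ring.
Qed.

Lemma block_matrix_e_in_span {T : op} {p q r s} : block_matrix T p q r s ->
  forall k n, in_block k n -> in_span_f n (T (e k)).
Proof.
  intros HB k n Hk. destruct (HB n) as [H1 [H2 _]].
  destruct Hk as [-> | ->].
  - exists (Cplus (Cmult (RtoC alpha) (p n)) (Cmult (RtoC beta) (r n))),
      (Cplus (Cmult (RtoC alpha) (q n)) (Cmult (RtoC beta) (s n))).
    intros j. rewrite op_e_even, H1, H2. C_ring.
  - exists (Cplus (Cmult (RtoC beta) (p n)) (Cmult (RtoC (- alpha)) (r n))),
      (Cplus (Cmult (RtoC beta) (q n)) (Cmult (RtoC (- alpha)) (s n))).
    intros j. rewrite op_e_odd, H1, H2. C_ring.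
Qed.

Lemma block_matrix_A0X {T : op} {p q r s} : block_matrix T p q r s -> A0X e X T.
Proof.
  intros HB. split.
  - intros k m Hne. destruct (block_of k) as [n Hk]. exists n. split; [exact Hk|].
    destruct (in_block_dec m n) as [Hm|[H1 H2]]; [exact Hm|].
    exfalso; apply Hne. apply (in_span_f_inner_e n); auto. apply (block_matrix_e_in_span HB); auto.
  - intros n Hn k Hk j. destruct (HB n) as [H1 [H2 H3]]. destruct (H3 Hn) as [Z1 [Z2 [Z3 Z4]]].
    destruct Hk as [-> | ->]; [rewrite op_e_even|rewrite op_e_odd]; rewrite H1, H2, Z1, Z2, Z3, Z4; C_ring.
Qed.

Lemma A0X_inner_out (T : op) : A0X e X T ->
  forall i j n, in_block i n -> j <> (2 * n)%nat -> j <> (2 * n + 1)%nat -> inner (T (e i)) (e j) = RtoC 0.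
Proof.
  intros [HA _] i j n Hi H1 H2. destruct (classic (inner (T (e i)) (e j) = RtoC 0)) as [E|E]; auto.
  destruct (HA i j E) as [n' [Hi' Hj']]. unfold in_block in *. exfalso. lia.
Qed.

Definition coef_ee (T : op) n := inner (T (f_even n)) (f_even n).
Definition coef_eo (T : op) n := inner (T (f_even n)) (f_odd n).
Definition coef_oe (T : op) n := inner (T (f_odd n)) (f_even n).
Definition coef_oo (T : op) n := inner (T (f_odd n)) (f_odd n).

Lemma A0X_block_matrix_coef (T : op) : A0X e X T ->
  block_matrix T (coef_ee T) (coef_eo T) (coef_oe T) (coef_oo T).
Proof.
  intros HA n.
  set (T0 := T (e (2 * n)%nat)). set (T1 := T (e (2 * n + 1)%nat)).
  assert (Heven :
    vec_eq (T (f_even n)) (fun k => Cplus (Cmult (RtoC alpha) (T0 k)) (Cmult (RtoC beta) (T1 k))))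
    by exact (op_lin T _ _ _ _ (f_even n) (fun k => eq_refl)).
  assert (Hodd :
    vec_eq (T (f_odd n)) (fun k => Cplus (Cmult (RtoC beta) (T0 k)) (Cmult (RtoC (- alpha)) (T1 k))))
    by exact (op_lin T _ _ _ _ (f_odd n) (fun k => eq_refl)).
  assert (Hout : forall (y : l2) a b, vec_eq y (fun k => Cplus (Cmult a (T0 k)) (Cmult b (T1 k))) ->
     forall j, j <> (2 * n)%nat -> j <> (2 * n + 1)%nat -> inner y (e j) = RtoC 0).
  { intros y a b Hy j H1 H2. rewrite (inner_ext y _ _ _ Hy (fun _ => eq_refl)), inner_lincomb_l by auto.
    unfold T0, T1. rewrite !(A0X_inner_out T HA _ j n) by (auto; unfold in_block; lia). C_ring. }
  split; [|split].
  - apply block_expansion, (Hout _ _ _ Heven).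
  - apply block_expansion, (Hout _ _ _ Hodd).
  - intros Hn. destruct HA as [_ HZ].
    assert (Z : forall a b, vec_eq (fun k => Cplus (Cmult a (T0 k)) (Cmult b (T1 k))) (fun _ => RtoC 0)).
    { intros a b k. unfold T0, T1. rewrite !(HZ n Hn) by (unfold in_block; lia). C_ring. }
    assert (Hzero : forall (y v : l2) a b, vec_eq y (fun k => Cplus (Cmult a (T0 k)) (Cmult b (T1 k))) ->
      inner y v = RtoC 0).
    { intros y v a b Hy. rewrite <- (inner_zero_l v). apply inner_ext; [|intros k; auto].
      intros k. rewrite Hy. apply Z. }
    unfold coef_ee, coef_eo, coef_oe, coef_oo.
    rewrite !(Hzero _ _ _ _ Heven), !(Hzero _ _ _ _ Hodd). auto.
Qed.

Lemma A0X_block_matrix (T : op) : A0X e X T -> exists p q r s, block_matrix T p q r s.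
Proof. intros H. do 4 eexists. apply A0X_block_matrix_coef, H. Qed.

Lemma block_matrix_coef_eq {T : op} {p q r s} p' q' r' s' : block_matrix T p q r s ->
  (forall n, p n = p' n /\ q n = q' n /\ r n = r' n /\ s n = s' n) -> block_matrix T p' q' r' s'.
Proof.
  intros HB HE n. destruct (HB n) as [H1 [H2 H3]]. destruct (HE n) as [E1 [E2 [E3 E4]]].
  rewrite <- E1, <- E2, <- E3, <- E4. auto.
Qed.

Lemma block_matrix_ext {T T' : op} {p q r s} : block_matrix T p q r s ->
  (forall u, vec_eq (T' u) (T u)) -> block_matrix T' p q r s.
Proof.
  intros HB HE n. destruct (HB n) as [H1 [H2 H3]].
  split; [|split]; auto; intros k; rewrite HE; auto.
Qed.

Lemma block_matrix_op_eq {T U : op} {p q r s p' q' r' s'} :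
  block_matrix T p q r s -> block_matrix U p' q' r' s' ->
  (forall n, X n -> p n = p' n /\ q n = q' n /\ r n = r' n /\ s n = s' n) -> forall u, vec_eq (T u) (U u).
Proof.
  intros HT HU HE.
  assert (Hblock : forall n, vec_eq (T (f_even n)) (U (f_even n)) /\ vec_eq (T (f_odd n)) (U (f_odd n))).
  { intros n. destruct (HT n) as [T1 [T2 T3]], (HU n) as [U1 [U2 U3]].
    assert (Hcoef : p n = p' n /\ q n = q' n /\ r n = r' n /\ s n = s' n).
    { destruct (classic (X n)) as [Hx|Hx]; [apply HE, Hx|].
      destruct (T3 Hx) as [Z1 [Z2 [Z3 Z4]]], (U3 Hx) as [W1 [W2 [W3 W4]]].
      rewrite Z1, Z2, Z3, Z4, W1, W2, W3, W4. auto. }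
    destruct Hcoef as [E1 [E2 [E3 E4]]].
    split; intros k; [rewrite T1, U1, E1, E2|rewrite T2, U2, E3, E4]; auto. }
  apply (ONB_op_eq e He). intros m k. destruct (block_of m) as [n [-> | ->]]; destruct (Hblock n) as [B1 B2];
    [rewrite !op_e_even|rewrite !op_e_odd]; rewrite B1, B2; auto.
Qed.

Lemma block_matrix_comp {T U : op} {p q r s p' q' r' s'} :
  block_matrix U p q r s -> block_matrix T p' q' r' s' ->
  block_matrix (comp_op T U)
    (fun n => Cplus (Cmult (p n) (p' n)) (Cmult (q n) (r' n)))
    (fun n => Cplus (Cmult (p n) (q' n)) (Cmult (q n) (s' n)))
    (fun n => Cplus (Cmult (r n) (p' n)) (Cmult (s n) (r' n)))
    (fun n => Cplus (Cmult (r n) (q' n)) (Cmult (s n) (s' n))).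
Proof.
  intros HU HT n. destruct (HU n) as [U1 [U2 U3]], (HT n) as [T1 [T2 T3]].
  split; [|split].
  - intros k. simpl. rewrite (op_lin T (p n) (q n) (f_even n) (f_odd n) _ U1), T1, T2. C_ring.
  - intros k. simpl. rewrite (op_lin T (r n) (s n) (f_even n) (f_odd n) _ U2), T1, T2. C_ring.
  - intros Hx. destruct (U3 Hx) as [Z1 [Z2 [Z3 Z4]]]. rewrite Z1, Z2, Z3, Z4. repeat split; C_ring.
Qed.

Lemma block_matrix_add {S T : op} {p q r s p' q' r' s'} :
  block_matrix S p q r s -> block_matrix T p' q' r' s' ->
  block_matrix (add_op S T) (fun n => Cplus (p n) (p' n)) (fun n => Cplus (q n) (q' n))
                            (fun n => Cplus (r n) (r' n)) (fun n => Cplus (s n) (s' n)).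
Proof.
  intros HS HT n. destruct (HS n) as [S1 [S2 S3]], (HT n) as [T1 [T2 T3]].
  split; [|split].
  - intros k. simpl. rewrite S1, T1. C_ring.
  - intros k. simpl. rewrite S2, T2. C_ring.
  - intros Hx. destruct (S3 Hx) as [Z1 [Z2 [Z3 Z4]]], (T3 Hx) as [W1 [W2 [W3 W4]]].
    rewrite Z1, Z2, Z3, Z4, W1, W2, W3, W4. repeat split; C_ring.
Qed.

Lemma block_matrix_scal c {T : op} {p q r s} : block_matrix T p q r s ->
  block_matrix (scal_op c T) (fun n => Cmult c (p n)) (fun n => Cmult c (q n))
                             (fun n => Cmult c (r n)) (fun n => Cmult c (s n)).
Proof.
  intros HT n. destruct (HT n) as [T1 [T2 T3]].
  split; [|split].
  - intros k. simpl. rewrite T1. C_ring.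
  - intros k. simpl. rewrite T2. C_ring.
  - intros Hx. destruct (T3 Hx) as [Z1 [Z2 [Z3 Z4]]]. rewrite Z1, Z2, Z3, Z4. repeat split; C_ring.
Qed.

Definition zero_seq : nat -> C := fun _ => RtoC 0.

Lemma block_matrix_zero : block_matrix zero_op zero_seq zero_seq zero_seq zero_seq.
Proof. intros n. unfold zero_seq. split; [|split]; try (intros k; simpl; C_ring). auto. Qed.

(* [T* f] is computed from [<T* f, g> = conj <T g, f>]; it stays in [H_n] because
   [T e_j] is orthogonal to [H_n] for [e_j] outside [H_n]. *)
Lemma block_matrix_adj {T : op} {p q r s} : block_matrix T p q r s ->
  block_matrix (adj T) (fun n => Cconj (p n)) (fun n => Cconj (r n))
                       (fun n => Cconj (q n)) (fun n => Cconj (s n)).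
Proof.
  intros HB n. destruct (HB n) as [H1 [H2 H3]].
  assert (Hc : forall (v w : l2), inner (adj T v) w = Cconj (inner (T w) v))
    by (intros v w; rewrite inner_conj, <- adj_is_adjoint; auto).
  assert (Hout : forall (v : l2) j, j <> (2 * n)%nat -> j <> (2 * n + 1)%nat ->
     v = f_even n \/ v = f_odd n -> inner (adj T v) (e j) = RtoC 0).
  { intros v j Hj1 Hj2 Hv. rewrite Hc. destruct (block_of j) as [n' Hn'].
    destruct (in_span_f_orth n' n (T (e j)) (block_matrix_e_in_span HB j n' Hn')) as [E1 E2];
      [unfold in_block in *; lia|].
    destruct Hv as [-> | ->]; [rewrite E1|rewrite E2]; C_ring. }
  destruct (in_span_f_coef n _ _ _ H1) as [A1 A2], (in_span_f_coef n _ _ _ H2) as [B1 B2].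
  split; [|split].
  - intros k.
    rewrite (block_expansion (adj T (f_even n)) n (fun j H H' => Hout _ j H H' (or_introl eq_refl))).
    rewrite !Hc, A1, B1. auto.
  - intros k.
    rewrite (block_expansion (adj T (f_odd n)) n (fun j H H' => Hout _ j H H' (or_intror eq_refl))).
    rewrite !Hc, A2, B2. auto.
  - intros Hx. destruct (H3 Hx) as [Z1 [Z2 [Z3 Z4]]]. rewrite Z1, Z2, Z3, Z4. repeat split; C_ring.
Qed.

Lemma Dset_block_matrix (T : op) : Dset e X alpha T -> exists p s, block_matrix T p zero_seq zero_seq s.
Proof.
  intros [HA HD]. exists (coef_ee T), (coef_oo T).
  apply (block_matrix_coef_eq _ _ _ _ (A0X_block_matrix_coef T HA)).
  intros n. destruct (classic (X n)) as [Hx|Hx];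
    [|destruct (A0X_block_matrix_coef T HA n) as [_ [_ Z]]; destruct (Z Hx) as [Z1 [Z2 [Z3 Z4]]];
      rewrite Z1, Z2, Z3, Z4; repeat split; auto].
  destruct (HD n Hx) as [D1 D2]. repeat split; auto; unfold zero_seq.
  - destruct (D1 (f_even n)) as [lam Hl]; [intros j; reflexivity|].
    unfold coef_eo. rewrite (inner_ext _ (fun j => Cmult lam (f_even n j)) _ _ Hl (fun _ => eq_refl)).
    rewrite inner_scal, inner_f_even_odd by auto. C_ring.
  - destruct (D2 (f_odd n)) as [lam Hl]; [intros j; simpl; unfold beta; C_ring|].
    unfold coef_oe. rewrite (inner_ext _ (fun j => Cmult lam (f_odd n j)) _ _ Hl (fun _ => eq_refl)).
    rewrite inner_scal, inner_f_odd_even by auto. C_ring.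
Qed.

Lemma Dset_of_block_matrix {T : op} {p q r s} : block_matrix T p q r s ->
  (forall n, q n = RtoC 0 /\ r n = RtoC 0) -> Dset e X alpha T.
Proof.
  intros HB Hz. split; [apply (block_matrix_A0X HB)|].
  intros n Hx. destruct (HB n) as [H1 [H2 _]], (Hz n) as [Zq Zr]. split.
  - intros w Hw. exists (p n). intros j.
    rewrite (op_compat T w (f_even n)) by (intros k; rewrite Hw; reflexivity).
    rewrite H1, Hw, Zq. simpl. unfold beta. C_ring.
  - intros w Hw. exists (s n). intros j.
    rewrite (op_compat T w (f_odd n)) by (intros k; rewrite Hw; simpl; unfold beta; C_ring).
    rewrite H2, Hw, Zr. simpl. unfold beta. C_ring.
Qed.

(** * The algebra [D_K(X, alpha)] *)

Definition indic n : R := if excluded_middle_informative (X n) then 1 else 0.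

Lemma indic_bounds n : 0 <= indic n <= 1.
Proof. unfold indic. destruct (excluded_middle_informative (X n)); lra. Qed.

Lemma indic_in n : X n -> indic n = 1.
Proof. unfold indic. destruct (excluded_middle_informative (X n)); tauto. Qed.

Lemma indic_out n : ~ X n -> indic n = 0.
Proof. unfold indic. destruct (excluded_middle_informative (X n)); tauto. Qed.

Definition indic_C : nat -> C := fun n => RtoC (indic n).

Definition weight_even k : R := if Nat.even k then indic (Nat.div2 k) else 0.
Definition weight_odd k : R := if Nat.even k then 0 else indic (Nat.div2 k).

Lemma weight_even_bounds k : 0 <= weight_even k <= 1.
Proof. unfold weight_even. destruct (Nat.even k); [apply indic_bounds|lra]. Qed.

Lemma weight_odd_bounds k : 0 <= weight_odd k <= 1.
Proof. unfold weight_odd. destruct (Nat.even k); [lra|apply indic_bounds]. Qed.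

(* The projections [P] onto [span {f_even n : X n}] and [Q] onto [span {f_odd n : X n}]. *)
Definition proj_even : op := diag_op fbasis fbasis_orthonormal weight_even weight_even_bounds.
Definition proj_odd : op := diag_op fbasis fbasis_orthonormal weight_odd weight_odd_bounds.

Lemma block_matrix_proj_even : block_matrix proj_even indic_C zero_seq zero_seq zero_seq.
Proof.
  intros n. unfold proj_even, indic_C, zero_seq. split; [|split].
  - intros k. rewrite <- fbasis_even, diag_op_f, fbasis_even.
    unfold weight_even. rewrite Nat.even_even, Nat.div2_double. C_ring.
  - intros k. rewrite <- fbasis_odd, diag_op_f, fbasis_odd.
    unfold weight_even. rewrite Nat.even_odd. C_ring.
  - intros Hx. rewrite indic_out; auto.
Qed.

Lemma block_matrix_proj_odd : block_matrix proj_odd zero_seq zero_seq zero_seq indic_C.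
Proof.
  intros n. unfold proj_odd, indic_C, zero_seq. split; [|split].
  - intros k. rewrite <- fbasis_even, diag_op_f, fbasis_even.
    unfold weight_odd. rewrite Nat.even_even. C_ring.
  - intros k. rewrite <- fbasis_odd, diag_op_f, fbasis_odd.
    unfold weight_odd. rewrite Nat.even_odd, Nat.div2_odd'. C_ring.
  - intros Hx. rewrite indic_out; auto.
Qed.

Lemma DK_A0X (T : op) : DK e X alpha T -> A0X e X T.
Proof.
  intros [S [R [HS [HR [HRA Hsum]]]]].
  destruct (Dset_block_matrix S HS) as [p [s HBS]], (A0X_block_matrix R HRA) as [p' [q' [r' [s' HBR]]]].
  eapply block_matrix_A0X, block_matrix_ext; [apply (block_matrix_add HBS HBR)|].
  intros u k. rewrite Hsum. reflexivity.
Qed.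

Lemma DK_zero : DK e X alpha zero_op.
Proof.
  exists zero_op, zero_op. split; [|split; [|split]].
  - apply (Dset_of_block_matrix block_matrix_zero). intros; unfold zero_seq; auto.
  - apply compact_zero.
  - apply (block_matrix_A0X block_matrix_zero).
  - intros u k. simpl. C_ring.
Qed.

Lemma DK_sum (T1 T2 U : op) : DK e X alpha T1 -> DK e X alpha T2 -> is_sum T1 T2 U -> DK e X alpha U.
Proof.
  intros [S1 [R1 [HS1 [HR1 [HA1 E1]]]]] [S2 [R2 [HS2 [HR2 [HA2 E2]]]]] HU.
  destruct (Dset_block_matrix S1 HS1) as [p1 [s1 B1]], (Dset_block_matrix S2 HS2) as [p2 [s2 B2]].
  destruct (A0X_block_matrix R1 HA1) as [a1 [b1 [c1 [d1 C1]]]],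
    (A0X_block_matrix R2 HA2) as [a2 [b2 [c2 [d2 C2]]]].
  exists (add_op S1 S2), (add_op R1 R2). split; [|split; [|split]].
  - eapply Dset_of_block_matrix; [apply (block_matrix_add B1 B2)|].
    intros n; unfold zero_seq; split; C_ring.
  - apply compact_add; auto.
  - eapply block_matrix_A0X. apply (block_matrix_add C1 C2).
  - intros u k. simpl. rewrite HU, E1, E2. C_ring.
Qed.

Lemma DK_scal c (T U : op) : DK e X alpha T -> is_scal c T U -> DK e X alpha U.
Proof.
  intros [S [R [HS [HR [HA E]]]]] HU.
  destruct (Dset_block_matrix S HS) as [p [s B]], (A0X_block_matrix R HA) as [a [b [c1 [d C1]]]].
  exists (scal_op c S), (scal_op c R). split; [|split; [|split]].
  - eapply Dset_of_block_matrix; [apply (block_matrix_scal c B)|].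
    intros n; unfold zero_seq; split; C_ring.
  - apply compact_scal; auto.
  - eapply block_matrix_A0X. apply (block_matrix_scal c C1).
  - intros u k. simpl. rewrite HU, E. C_ring.
Qed.

(* [(S1 + R1) (S2 + R2) = S1 S2 + (S1 R2 + R1 S2 + R1 R2)]. *)
Lemma DK_comp (T1 T2 U : op) : DK e X alpha T1 -> DK e X alpha T2 -> is_comp T1 T2 U -> DK e X alpha U.
Proof.
  intros [S1 [R1 [HS1 [HR1 [HA1 E1]]]]] [S2 [R2 [HS2 [HR2 [HA2 E2]]]]] HU.
  destruct (Dset_block_matrix S1 HS1) as [p1 [s1 B1]], (Dset_block_matrix S2 HS2) as [p2 [s2 B2]].
  destruct (A0X_block_matrix R1 HA1) as [a1 [b1 [c1 [d1 C1]]]],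
    (A0X_block_matrix R2 HA2) as [a2 [b2 [c2 [d2 C2]]]].
  exists (comp_op S1 S2), (add_op (add_op (comp_op S1 R2) (comp_op R1 S2)) (comp_op R1 R2)).
  split; [|split; [|split]].
  - eapply Dset_of_block_matrix; [apply (block_matrix_comp B2 B1)|].
    intros n; unfold zero_seq; split; C_ring.
  - apply compact_add; [apply compact_add|]; auto using compact_comp_l, compact_comp_r.
  - exact (block_matrix_A0X (block_matrix_add
      (block_matrix_add (block_matrix_comp C2 B1) (block_matrix_comp B2 C1)) (block_matrix_comp C2 C1))).
  - intros u k. simpl. rewrite HU, E1, (op_linear_add S1 (S2 u) (R2 u) (T2 u) (E2 u)),
      (op_linear_add R1 (S2 u) (R2 u) (T2 u) (E2 u)). C_ring.
Qed.

Lemma DK_adj (T : op) : DK e X alpha T -> exists U, DK e X alpha U /\ is_adjoint T U.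
Proof.
  intros [S [R [HS [HR [HA E]]]]]. exists (adj T). split; [|apply adj_is_adjoint].
  destruct (Dset_block_matrix S HS) as [p [s B]], (A0X_block_matrix R HA) as [a [b [c1 [d C1]]]].
  exists (adj S), (adj R). split; [|split; [|split]].
  - eapply Dset_of_block_matrix; [apply (block_matrix_adj B)|].
    intros n; unfold zero_seq; split; C_ring.
  - apply compact_adj; auto.
  - eapply block_matrix_A0X. apply (block_matrix_adj C1).
  - intros v k. simpl. unfold adj_seq.
    rewrite (inner_ext v v (T (l2_unit k))
      (fun j => Cplus (Cmult (RtoC 1) (S (l2_unit k) j)) (Cmult (RtoC 1) (R (l2_unit k) j))))
      by (intros j; auto || rewrite E; C_ring).
    rewrite inner_lincomb_r by auto. C_ring.
Qed.

Definition diag_part (T : op) : op :=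
  add_op (comp_op proj_even (comp_op T proj_even)) (comp_op proj_odd (comp_op T proj_odd)).
Definition off_part (T : op) : op :=
  add_op (comp_op proj_even (comp_op T proj_odd)) (comp_op proj_odd (comp_op T proj_even)).

Lemma block_matrix_diag_part {T : op} {p q r s} : block_matrix T p q r s ->
  exists p' q' r' s', block_matrix (diag_part T) p' q' r' s' /\
    (forall n, q' n = RtoC 0 /\ r' n = RtoC 0) /\ (forall n, X n -> p' n = p n /\ s' n = s n).
Proof.
  intros HB. do 4 eexists. split.
  - exact (block_matrix_add (block_matrix_comp (block_matrix_comp block_matrix_proj_even HB)
         block_matrix_proj_even)
      (block_matrix_comp (block_matrix_comp block_matrix_proj_odd HB)
         block_matrix_proj_odd)).
  - split; intros n; unfold zero_seq, indic_C; [|intros Hx; rewrite indic_in by auto]; split; C_ring.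
Qed.

Lemma block_matrix_off_part {T : op} {p q r s} : block_matrix T p q r s ->
  exists p' q' r' s', block_matrix (off_part T) p' q' r' s' /\
    (forall n, X n -> p' n = RtoC 0 /\ q' n = q n /\ r' n = r n /\ s' n = RtoC 0).
Proof.
  intros HB. do 4 eexists. split.
  - exact (block_matrix_add (block_matrix_comp (block_matrix_comp block_matrix_proj_odd HB)
         block_matrix_proj_even)
      (block_matrix_comp (block_matrix_comp block_matrix_proj_even HB)
         block_matrix_proj_odd)).
  - intros n Hx. unfold zero_seq, indic_C. rewrite indic_in by auto. repeat split; C_ring.
Qed.

Lemma diag_part_Dset (T : op) : A0X e X T -> Dset e X alpha (diag_part T).
Proof.
  intros HA. destruct (A0X_block_matrix T HA) as [p [q [r [s HB]]]].
  destruct (block_matrix_diag_part HB) as [p' [q' [r' [s' [H1 [H2 _]]]]]].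
  eapply Dset_of_block_matrix; eauto.
Qed.

Lemma off_part_A0X (T : op) : A0X e X T -> A0X e X (off_part T).
Proof.
  intros HA. destruct (A0X_block_matrix T HA) as [p [q [r [s HB]]]].
  destruct (block_matrix_off_part HB) as [p' [q' [r' [s' [H1 _]]]]].
  eapply block_matrix_A0X; eauto.
Qed.

Lemma diag_off_decomp (T : op) : A0X e X T -> is_sum (diag_part T) (off_part T) T.
Proof.
  intros HA. destruct (A0X_block_matrix T HA) as [p [q [r [s HB]]]].
  destruct (block_matrix_diag_part HB) as [p' [q' [r' [s' [H1 [H2 H3]]]]]].
  destruct (block_matrix_off_part HB) as [p2 [q2 [r2 [s2 [G1 G3]]]]].
  intros u k. change (Cplus (diag_part T u k) (off_part T u k)) with (add_op (diag_part T) (off_part T) u k).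
  apply (block_matrix_op_eq HB (block_matrix_add H1 G1)).
  intros n Hx. destruct (H2 n) as [Z1 Z2], (H3 n Hx) as [Y1 Y2], (G3 n Hx) as [W1 [W2 [W3 W4]]].
  rewrite Z1, Z2, Y1, Y2, W1, W2, W3, W4. repeat split; C_ring.
Qed.

Definition commutator_proj (T : op) : op := sub_op (comp_op T proj_even) (comp_op proj_even T).

(* [P T Q + Q T P = Q [T, P] - P [T, P]], both sides having the block matrix [[0, r], [q, 0]]. *)
Lemma off_part_commutator (T : op) : A0X e X T -> forall u,
  vec_eq (off_part T u)
    (sub_op (comp_op proj_odd (commutator_proj T)) (comp_op proj_even (commutator_proj T)) u).
Proof.
  intros HA. destruct (A0X_block_matrix T HA) as [p [q [r [s HB]]]].
  destruct (block_matrix_off_part HB) as [p2 [q2 [r2 [s2 [G1 G3]]]]].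
  assert (BK := block_matrix_add (block_matrix_comp block_matrix_proj_even HB)
    (block_matrix_scal (RtoC (-1)) (block_matrix_comp HB block_matrix_proj_even))).
  apply (block_matrix_op_eq G1 (block_matrix_add (block_matrix_comp BK block_matrix_proj_odd)
    (block_matrix_scal (RtoC (-1)) (block_matrix_comp BK block_matrix_proj_even)))).
  intros n Hx. destruct (G3 n Hx) as [W1 [W2 [W3 W4]]]. rewrite W1, W2, W3, W4.
  unfold zero_seq, indic_C. rewrite indic_in by auto. repeat split; C_ring.
Qed.

Lemma off_part_compact_of_commutator (T K : op) : A0X e X T -> compact_op K ->
  (forall u k, lv (K u) k = Cminus (lv (T (proj_even u)) k) (lv (proj_even (T u)) k)) ->
  compact_op (off_part T).
Proof.
  intros HA HK HKe.
  assert (HKc : forall u, vec_eq (commutator_proj T u) (K u))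
    by (intros u j; rewrite HKe; unfold commutator_proj, sub_op;
        cbn [app add_op scal_op comp_op l2_add l2_scal lv]; C_ring).
  apply (compact_ext (sub_op (comp_op proj_odd K) (comp_op proj_even K))).
  - apply compact_add; [|apply compact_scal]; apply compact_comp_l; auto.
  - intros u k. rewrite (off_part_commutator T HA u k). unfold sub_op.
    cbn [app add_op scal_op comp_op l2_add l2_scal lv].
    rewrite (op_compat proj_odd (commutator_proj T u) (K u)),
      (op_compat proj_even (commutator_proj T u) (K u))
      by apply HKc.
    reflexivity.
Qed.

Lemma DK_of_off_part_compact (T : op) : A0X e X T -> compact_op (off_part T) -> DK e X alpha T.
Proof.
  intros HA HC. exists (diag_part T), (off_part T).
  split; [|split; [|split]]; auto using diag_part_Dset, off_part_A0X, diag_off_decomp.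
Qed.

(* The off-diagonal part of [S + R] is that of [R], since [S] is block diagonal. *)
Lemma off_part_compact_of_DK (T : op) : DK e X alpha T -> compact_op (off_part T).
Proof.
  intros [S [R [HS [HR [HRA E]]]]].
  destruct (Dset_block_matrix S HS) as [p [s B]], (A0X_block_matrix R HRA) as [a [b [c [d C1]]]].
  apply (compact_ext (off_part R)).
  - apply compact_add; apply compact_comp_l, compact_comp_r; auto.
  - assert (BT := block_matrix_ext (T' := T) (block_matrix_add B C1) (fun u k => E u k)).
    destruct (block_matrix_off_part BT) as [p2 [q2 [r2 [s2 [G1 G3]]]]].
    destruct (block_matrix_off_part C1) as [p3 [q3 [r3 [s3 [F1 F3]]]]].
    apply (block_matrix_op_eq G1 F1).
    intros m Hx. destruct (G3 m Hx) as [W1 [W2 [W3 W4]]], (F3 m Hx) as [V1 [V2 [V3 V4]]].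
    rewrite W1, W2, W3, W4, V1, V2, V3, V4. unfold zero_seq. repeat split; C_ring.
Qed.

Lemma proj_even_DK : DK e X alpha proj_even.
Proof.
  exists proj_even, zero_op. split; [|split; [|split]].
  - apply (Dset_of_block_matrix block_matrix_proj_even). intros; unfold zero_seq; auto.
  - apply compact_zero.
  - apply (block_matrix_A0X block_matrix_zero).
  - intros u k. cbn [app zero_op l2_zero lv]. C_ring.
Qed.

Lemma A0X_lim (Tn : nat -> op) (T : op) : (forall n, A0X e X (Tn n)) -> op_norm_cvg Tn T -> A0X e X T.
Proof.
  intros HA Hc. split.
  - intros k m Hne. apply NNPP. intros Hno. apply Hne.
    apply (l2_cvg_inner_eq_0 (fun n => Tn n (e k))); [apply op_norm_cvg_apply, Hc|].
    intros n. apply NNPP. intros Hnz. apply Hno, (proj1 (HA n) k m Hnz).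
  - intros n Hn k Hk. apply (l2_cvg_eq_0 (fun n => Tn n (e k))); [apply op_norm_cvg_apply, Hc|].
    intros i j. apply (proj2 (HA i) n Hn k Hk).
Qed.

Lemma off_part_cvg (Tn : nat -> op) (T : op) : op_norm_cvg Tn T ->
  op_norm_cvg (fun n => off_part (Tn n)) (off_part T).
Proof.
  intros H. unfold off_part.
  apply (op_norm_cvg_add (fun n => comp_op proj_even (comp_op (Tn n) proj_odd))
                         (fun n => comp_op proj_odd (comp_op (Tn n) proj_even)));
    apply op_norm_cvg_comp_l, (op_norm_cvg_comp_r Tn), H.
Qed.

Lemma DK_lim (Tn : nat -> op) (T : op) : (forall n, DK e X alpha (Tn n)) -> op_norm_cvg Tn T ->
  DK e X alpha T.
Proof.
  intros HD Hc. apply DK_of_off_part_compact.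
  - apply (A0X_lim Tn); auto. intros n; apply DK_A0X; auto.
  - apply (compact_limit (fun n => off_part (Tn n))); [intros n; apply off_part_compact_of_DK; auto|].
    apply off_part_cvg, Hc.
Qed.

(* Block diagonal operators commute, so [[S1 + R1, S2 + R2]] only involves compact terms. *)
Lemma DK_comm (T1 T2 : op) : DK e X alpha T1 -> DK e X alpha T2 -> almost_commute T1 T2.
Proof.
  intros [S1 [R1 [HS1 [HR1 [HA1 E1]]]]] [S2 [R2 [HS2 [HR2 [HA2 E2]]]]].
  destruct (Dset_block_matrix S1 HS1) as [p1 [s1 B1]], (Dset_block_matrix S2 HS2) as [p2 [s2 B2]].
  assert (Hc : forall u, vec_eq (comp_op S1 S2 u) (comp_op S2 S1 u)).
  { apply (block_matrix_op_eq (block_matrix_comp B2 B1) (block_matrix_comp B1 B2)).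
    intros n _. unfold zero_seq. repeat split; C_ring. }
  set (K1 := add_op (add_op (comp_op S1 R2) (comp_op R1 S2)) (comp_op R1 R2)).
  set (K2 := add_op (add_op (comp_op S2 R1) (comp_op R2 S1)) (comp_op R2 R1)).
  assert (HK : forall Sa Sb Ra Rb : op, compact_op Ra -> compact_op Rb ->
    compact_op (add_op (add_op (comp_op Sa Rb) (comp_op Ra Sb)) (comp_op Ra Rb)))
    by (intros; apply compact_add; [apply compact_add|]; auto using compact_comp_l, compact_comp_r).
  exists (sub_op K1 K2). split.
  - apply compact_add; [|apply compact_scal]; apply HK; auto.
  - intros u k. unfold sub_op, K1, K2. simpl.
    rewrite E1, E2, (op_linear_add S1 (S2 u) (R2 u) (T2 u) (E2 u) k),
      (op_linear_add R1 (S2 u) (R2 u) (T2 u) (E2 u) k), (op_linear_add S2 (S1 u) (R1 u) (T1 u) (E1 u) k),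
      (op_linear_add R2 (S1 u) (R1 u) (T1 u) (E1 u) k).
    assert (H := Hc u k). simpl in H. rewrite H. C_ring.
Qed.

(* Anything almost commuting with [P = proj_even] has a compact off-diagonal part. *)
Lemma DK_max (B : op -> Prop) : cstar_subalg B (A0X e X) -> pairwise_almost_commuting B ->
  (forall T, DK e X alpha T -> B T) -> forall T, B T -> DK e X alpha T.
Proof.
  intros [_ HBA] Hpc Hsub T HT. assert (HA := HBA T HT).
  destruct (Hpc T proj_even HT (Hsub proj_even proj_even_DK)) as [K [HK HKe]].
  apply DK_of_off_part_compact; auto. apply (off_part_compact_of_commutator T K); auto.
Qed.

Lemma DK_cstar_alg : cstar_alg (DK e X alpha).
Proof.
  split; [|split; [|split; [|split; [|split]]]].
  - exists zero_op. split; [apply DK_zero|intros u k; reflexivity].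
  - intros S T U. apply DK_sum.
  - intros c T U. apply DK_scal.
  - intros S T U. apply DK_comp.
  - apply DK_adj.
  - apply DK_lim.
Qed.

End Blocks.

Theorem lemma4p8 (e : nat -> l2) (He : is_ONB e) (X : nat -> Prop) (alpha : R)
  (Halpha : 71 / 72 < alpha <= 1) :
  almost_masa (DK e X alpha) (A0X e X).
Proof.
  assert (Ha : alpha ^ 2 <= 1) by nra.
  split; [split|split].
  - apply DK_cstar_alg; auto.
  - apply DK_A0X; auto.
  - intros S T. apply DK_comm; auto.
  - apply DK_max; auto.
Qed.
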